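(* Let $a_n^{\mathrm{cyclic}}$ denote the number of cocyclic subrings of $\mathbb{Z}[t]/(t^3)$ of index $n$. (i) For every prime $p$, \[ \sum_{k\ge0}a_{p^k}^{\mathrm{cyclic}}\,p^{-ks}=\frac{1+p^{-s}+p^{1-2s}}{1-p^{2-3s}} . \] (ii) For $\operatorname{Re}(s)$ sufficiently large, \[ \sum_{n=1}^\infty \frac{a_n^{\mathrm{cyclic}}}{n^s}=\zeta(s)\,\zeta(2s-1)\,\zeta(3s-2)\prod_p\bigl(1-p^{-2s}-p^{1-3s}+p^{1-4s}-p^{2-4s}+p^{2-5s}\bigr), \] where the product runs over all primes and $\zeta$ denotes the Riemann zeta function.
   Context: A subring of $R=\mathbb{Z}[t]/(t^3)$ means an additive subgroup of finite index that contains $1$ and is closed under multiplication. For a finite-index subgroup $S\subseteq R\cong\mathbb{Z}^3$ there are unique positive integers $\alpha_1(S),\alpha_2(S),\alpha_3(S)$ with $\alpha_{i+1}\mid\alpha_i$ and $R/S\cong\bigoplus_{i=1}^3\mathbb{Z}/\alpha_i\mathbb{Z}$. The subgroup $S$ is called cocyclic if $R/S$ is cyclic. For a subring this is equivalent to $\alpha_2(S)=1$. *)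

From Stdlib Require Import ZArith List Reals ClassicalEpsilon Znumtheory.
From Coquelicot Require Import Coquelicot.
Import ListNotations.

(* An element (a, b, c) represents a + b t + c t^2. *)
Definition Rt3 : Type := (Z * Z * Z)%type.

Definition rzero : Rt3 := (0, 0, 0)%Z.
Definition rone : Rt3 := (1, 0, 0)%Z.
Definition radd (x y : Rt3) : Rt3 :=
  let '(a, b, c) := x in let '(a', b', c') := y in (a + a', b + b', c + c')%Z.
Definition ropp (x : Rt3) : Rt3 := let '(a, b, c) := x in (- a, - b, - c)%Z.
Definition rmul (x y : Rt3) : Rt3 :=
  let '(a, b, c) := x in let '(a', b', c') := y in
  (a * a', a * b' + b * a', a * c' + b * b' + c * a')%Z.
Definition rscale (k : Z) (x : Rt3) : Rt3 :=
  let '(a, b, c) := x in (k * a, k * b, k * c)%Z.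

Definition is_add_subgroup (S : Rt3 -> Prop) : Prop :=
  S rzero /\ (forall x y, S x -> S y -> S (radd x y)) /\
  (forall x, S x -> S (ropp x)).

Definition congr (S : Rt3 -> Prop) (x y : Rt3) : Prop := S (radd x (ropp y)).

Definition has_index (S : Rt3 -> Prop) (n : nat) : Prop :=
  exists reps : list Rt3, length reps = n /\
    (forall i j, (i < n)%nat -> (j < n)%nat ->
       congr S (nth i reps rzero) (nth j reps rzero) -> i = j) /\
    (forall x, exists i, (i < n)%nat /\ congr S x (nth i reps rzero)).

Definition finite_index (S : Rt3 -> Prop) : Prop := exists n, has_index S n.

Definition is_subring (S : Rt3 -> Prop) : Prop :=
  is_add_subgroup S /\ finite_index S /\ S rone /\
  (forall x y, S x -> S y -> S (rmul x y)).

Definition cocyclic (S : Rt3 -> Prop) : Prop :=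
  exists g : Rt3, forall x, exists k : Z, congr S x (rscale k g).

Definition set_equiv (S T : Rt3 -> Prop) : Prop := forall x, S x <-> T x.

Definition counts (P : (Rt3 -> Prop) -> Prop) (k : nat) : Prop :=
  exists L : list (Rt3 -> Prop), length L = k /\
    (forall S, In S L -> P S) /\
    (forall i j, (i < k)%nat -> (j < k)%nat ->
       set_equiv (nth i L (fun _ => False)) (nth j L (fun _ => False)) -> i = j) /\
    (forall S, P S -> exists T, In T L /\ set_equiv S T).

Definition cocyclic_subring_of_index (n : nat) (S : Rt3 -> Prop) : Prop :=
  is_subring S /\ cocyclic S /\ has_index S n.

(* a_n^cyclic : the number of cocyclic subrings of index n
   (0 by convention if there were infinitely many; there are not). *)
Definition a_cyclic (n : nat) : nat :=
  match excluded_middle_informative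
          (exists k, counts (cocyclic_subring_of_index n) k) with
  | left H => proj1_sig (constructive_indefinite_description _ H)
  | right _ => 0%nat
  end.

(* x ^ s := exp (s ln x) for real x > 0 and complex s *)
Definition cpow (x : R) (s : C) : C :=
  let r := exp (Re s * ln x) in
  (r * cos (Im s * ln x), r * sin (Im s * ln x))%R.

Definition CSeries (a : nat -> C) : C :=
  (Series (fun n => Re (a n)), Series (fun n => Im (a n))).

(* Riemann zeta via its Dirichlet series (valid for Re s > 1) *)
Definition zeta (s : C) : C := CSeries (fun n => cpow (INR (S n)) (- s)).

Definition prime_prod (f : nat -> C) (N : nat) : C :=
  fold_right (fun p acc => if prime_dec (Z.of_nat p) then Cmult (f p) acc else acc)
             (RtoC 1) (seq 0 (S N)).

(* If S is a cocyclic subring of index n, R/S is cyclic of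
   order n, so membership in S is a linear congruence modulo n in the
   coordinates; closure under multiplication forces this congruence to be
   "n | b + c x" for a residue x with n | x^3.  Conversely every such S_x is a
   cocyclic subring of index n, and distinct residues give distinct subrings.
   Hence a_n = #{x mod n | n | x^3}, which is multiplicative by the Chinese
   remainder theorem and equals p^(k - ceil(k/3)) at n = p^k.

   Part (i) sums the local series using a_(p^(k+3)) = p^2 a_(p^k).  Part (ii)
   follows from a general Euler product theorem for absolutely convergent
   series with multiplicative coefficients, applied to a_n n^-s and to zeta at
   s, 2s-1, 3s-2 (which do not vanish for Re s > 3), after factoring the
   Euler factor of the statement as the local factor times the inverted zeta
   factors. *)

From Stdlib Require Import ZArith List Reals Znumtheory.
From Stdlib Require Import Lia Lra Permutation ClassicalEpsilon Classical.
From Coquelicot Require Import Coquelicot.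
Import ListNotations.

Local Open Scope C_scope.

(** * Convergence of complex sequences *)

(* The epsilon-N form of convergence in C; it is equivalent to Coquelicot's
   filter convergence and more convenient for explicit estimates. *)
Definition Ccv (u : nat -> C) (l : C) : Prop :=
  forall eps : R, (0 < eps)%R ->
    exists N, forall n, (N <= n)%nat -> (Cmod (u n - l) < eps)%R.

Lemma Cmod_Im_le (z : C) : (Rabs (Im z) <= Cmod z)%R.
Proof.
  destruct z as [a b]. unfold Cmod, Im; simpl.
  rewrite <- sqrt_Rsqr_abs. apply sqrt_le_1_alt. unfold Rsqr. nra.
Qed.

Lemma Cmod_le_Re_Im (z : C) : (Cmod z <= Rabs (Re z) + Rabs (Im z))%R.
Proof.
  destruct z as [a b]. unfold Cmod, Re, Im; simpl.
  pose proof (Rabs_pos a); pose proof (Rabs_pos b).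
  rewrite <- (sqrt_Rsqr (Rabs a + Rabs b)) by lra.
  apply sqrt_le_1_alt. unfold Rsqr.
  assert (Ha : (a * a = Rabs a * Rabs a)%R) by (rewrite <- Rabs_mult, Rabs_right; nra).
  assert (Hb : (b * b = Rabs b * Rabs b)%R) by (rewrite <- Rabs_mult, Rabs_right; nra).
  nra.
Qed.

Lemma Ccv_Re_Im (u : nat -> C) (l : C) :
  Ccv u l <->
  is_lim_seq (fun n => Re (u n)) (Re l) /\ is_lim_seq (fun n => Im (u n)) (Im l).
Proof.
  split.
  - intros H. split; apply is_lim_seq_spec; intros eps;
      destruct (H eps (cond_pos eps)) as [N HN]; exists N; intros n Hn;
      specialize (HN n Hn); eapply Rle_lt_trans; try exact HN.
    + replace (Re (u n) - Re l)%R with (Re (u n - l)) by (simpl; unfold Re; ring).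
      apply re_le_Cmod.
    + replace (Im (u n) - Im l)%R with (Im (u n - l)) by (simpl; unfold Im; ring).
      apply Cmod_Im_le.
  - intros [H1 H2] eps Heps. apply is_lim_seq_spec in H1, H2.
    destruct (H1 (mkposreal (eps / 2) ltac:(lra))) as [N1 HN1].
    destruct (H2 (mkposreal (eps / 2) ltac:(lra))) as [N2 HN2].
    exists (max N1 N2). intros n Hn.
    specialize (HN1 n ltac:(lia)). specialize (HN2 n ltac:(lia)). simpl in HN1, HN2.
    eapply Rle_lt_trans; [apply Cmod_le_Re_Im|].
    replace (Re (u n - l)) with (Re (u n) - Re l)%R by (simpl; unfold Re; ring).
    replace (Im (u n - l)) with (Im (u n) - Im l)%R by (simpl; unfold Im; ring).
    lra.
Qed.

Lemma Ccv_filterlim (u : nat -> C) (l : C) :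
  Ccv u l <-> filterlim u eventually (locally l).
Proof.
  rewrite Ccv_Re_Im. split.
  - intros [H1 H2]. apply filterlim_locally. intros eps.
    apply is_lim_seq_spec in H1, H2.
    destruct (H1 eps) as [N1 HN1]. destruct (H2 eps) as [N2 HN2].
    exists (max N1 N2). intros n Hn.
    split; [apply (HN1 n ltac:(lia)) | apply (HN2 n ltac:(lia))].
  - intros H. split; apply is_lim_seq_spec; intros eps;
      destruct (proj1 (filterlim_locally u l) H eps) as [N HN];
      exists N; intros n Hn; apply (HN n Hn).
Qed.

Lemma Ccv_const (a : C) : Ccv (fun _ => a) a.
Proof.
  intros eps He. exists O. intros n _.
  replace (a - a) with (RtoC 0) by ring. rewrite Cmod_0. lra.
Qed.

Lemma Ccv_ext (u v : nat -> C) (l : C) : (forall n, u n = v n) -> Ccv v l -> Ccv u l.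
Proof.
  intros E H eps He. destruct (H eps He) as [N HN].
  exists N. intros n Hn. rewrite E. auto.
Qed.

Lemma Ccv_mult (u v : nat -> C) (a b : C) :
  Ccv u a -> Ccv v b -> Ccv (fun n => u n * v n) (a * b).
Proof.
  rewrite !Ccv_Re_Im. intros [H1 H2] [H3 H4]. split; simpl.
  - apply is_lim_seq_minus'; apply is_lim_seq_mult'; auto.
  - apply is_lim_seq_plus'; apply is_lim_seq_mult'; auto.
Qed.

Lemma Ccv_inv (u : nat -> C) (a : C) : Ccv u a -> a <> 0 -> Ccv (fun n => / u n) (/ a).
Proof.
  intros H Ha eps He. set (m := Cmod a).
  assert (Hm : (0 < m)%R) by (apply Cmod_gt_0; auto).
  assert (Hpos : (0 < eps * m * m / 2)%R).
  { apply Rmult_lt_0_compat; [|lra]. apply Rmult_lt_0_compat; [apply Rmult_lt_0_compat|]; lra. }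
  destruct (H (Rmin (m / 2) (eps * m * m / 2)) ltac:(apply Rmin_glb_lt; lra)) as [N HN].
  exists N. intros n Hn. specialize (HN n Hn).
  assert (H1 : (Cmod (u n - a) < m / 2)%R) by (eapply Rlt_le_trans; [exact HN|apply Rmin_l]).
  assert (H2 : (Cmod (u n - a) < eps * m * m / 2)%R)
    by (eapply Rlt_le_trans; [exact HN|apply Rmin_r]).
  assert (Hu : (m / 2 <= Cmod (u n))%R).
  { pose proof (Cmod_triangle (u n) (a - u n)) as T.
    replace (u n + (a - u n)) with a in T by ring.
    replace (a - u n) with (- (u n - a)) in T by ring. rewrite Cmod_opp in T. fold m in T. lra. }
  assert (Hun : u n <> 0) by (intros E; rewrite E, Cmod_0 in Hu; lra).
  replace (/ u n - / a) with (- (u n - a) * / (u n * a)) by (field; auto).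
  rewrite Cmod_mult, Cmod_opp, Cmod_inv, Cmod_mult by (apply Cmult_neq_0; auto). fold m.
  assert (Hi : (/ (Cmod (u n) * m) <= / (m * m / 2))%R) by (apply Rinv_le_contravar; nra).
  pose proof (Cmod_ge_0 (u n - a)).
  eapply Rle_lt_trans; [apply Rmult_le_compat_l; [assumption|exact Hi]|].
  apply (Rmult_lt_reg_r (m * m / 2)); [nra|]. rewrite Rmult_assoc, Rinv_l by nra. lra.
Qed.

Lemma Ccv_unique (u : nat -> C) (a b : C) : Ccv u a -> Ccv u b -> a = b.
Proof.
  rewrite !Ccv_filterlim. intros H1 H2.
  exact (filterlim_locally_unique (K:=C_AbsRing) (V:=C_NormedModule) u a b H1 H2).
Qed.

Lemma Ccv_le (u : nat -> C) (l a : C) (c : R) :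
  Ccv u l -> (exists N, forall n, (N <= n)%nat -> (Cmod (u n - a) <= c)%R) ->
  (Cmod (l - a) <= c)%R.
Proof.
  intros H [N HN]. destruct (Rle_lt_dec (Cmod (l - a)) c) as [?|Hlt]; auto. exfalso.
  destruct (H (Cmod (l - a) - c)%R ltac:(lra)) as [M HM].
  specialize (HM (max N M) ltac:(lia)). specialize (HN (max N M) ltac:(lia)).
  pose proof (Cmod_triangle (l - u (max N M)) (u (max N M) - a)) as T.
  replace (l - u (max N M) + (u (max N M) - a)) with (l - a) in T by ring.
  replace (l - u (max N M)) with (- (u (max N M) - l)) in T by ring.
  rewrite Cmod_opp in T. lra.
Qed.

Lemma CSeries_correct (a : nat -> C) (l : C) : is_series a l -> CSeries a = l.
Proof.
  intros H. apply Ccv_filterlim, Ccv_Re_Im in H. destruct H as [H1 H2].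
  assert (Hre : forall n, Re (sum_n a n) = sum_n (fun k => Re (a k)) n).
  { induction n; [now rewrite !sum_O | rewrite !sum_Sn, <- IHn; reflexivity]. }
  assert (Him : forall n, Im (sum_n a n) = sum_n (fun k => Im (a k)) n).
  { induction n; [now rewrite !sum_O | rewrite !sum_Sn, <- IHn; reflexivity]. }
  unfold CSeries. destruct l as [l1 l2]. f_equal; apply is_series_unique.
  - exact (is_lim_seq_ext _ _ _ Hre H1).
  - exact (is_lim_seq_ext _ _ _ Him H2).
Qed.

Lemma is_series_Cgeom (z : C) : (Cmod z < 1)%R -> is_series (fun k => z ^ k) (/ (1 - z)).
Proof.
  intros Hz. assert (Hz1 : 1 - z <> 0).
  { intros E. assert (z = 1) by (replace z with (1 - (1 - z)) by ring; rewrite E; ring).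
    subst. rewrite Cmod_1 in Hz. lra. }
  assert (Hs : forall n, sum_n (fun k => z ^ k) n = (1 - z ^ (S n)) / (1 - z)).
  { induction n.
    - rewrite sum_O. simpl. field. auto.
    - rewrite sum_Sn, IHn.
      change ((1 - z ^ S n) / (1 - z) + z ^ S n = (1 - z ^ S (S n)) / (1 - z)).
      simpl. field. auto. }
  apply Ccv_filterlim. intros eps He.
  assert (Hm : (0 < Cmod (1 - z))%R) by (apply Cmod_gt_0; auto).
  assert (Hg : is_lim_seq (fun n => Cmod z ^ n)%R 0%R).
  { apply is_lim_seq_geom. rewrite Rabs_right; [lra|apply Rle_ge, Cmod_ge_0]. }
  apply is_lim_seq_spec in Hg.
  destruct (Hg (mkposreal _ (Rmult_lt_0_compat _ _ He Hm))) as [N HN].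
  exists N. intros n Hn. rewrite Hs.
  replace ((1 - z ^ S n) / (1 - z) - / (1 - z)) with (- (z ^ S n) * / (1 - z)) by (field; auto).
  rewrite Cmod_mult, Cmod_opp, Cmod_inv, Cmod_pow by auto.
  specialize (HN (S n) ltac:(lia)). simpl in HN. rewrite Rminus_0_r, Rabs_right in HN.
  2: { apply Rle_ge. apply Rmult_le_pos; [apply Cmod_ge_0|apply pow_le, Cmod_ge_0]. }
  apply (Rmult_lt_reg_r (Cmod (1 - z))); auto. rewrite Rmult_assoc, Rinv_l by lra. simpl. lra.
Qed.

Lemma cpow_add (x : R) (a b : C) : cpow x (a + b) = cpow x a * cpow x b.
Proof.
  destruct a as [a1 a2], b as [b1 b2]. unfold cpow, Cmult, Re, Im; simpl.
  rewrite !Rmult_plus_distr_r, exp_plus, cos_plus, sin_plus. f_equal; ring.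
Qed.

Lemma cpow_mult_base (x y : R) (s : C) :
  (0 < x)%R -> (0 < y)%R -> cpow (x * y) s = cpow x s * cpow y s.
Proof.
  intros Hx Hy. destruct s as [a1 a2]. unfold cpow, Cmult, Re, Im; simpl.
  rewrite ln_mult by auto.
  rewrite !Rmult_plus_distr_l, exp_plus, cos_plus, sin_plus. f_equal; ring.
Qed.

Lemma cpow_1_base (s : C) : cpow 1 s = 1.
Proof.
  unfold cpow. rewrite ln_1, !Rmult_0_r, exp_0, cos_0, sin_0. unfold RtoC. f_equal; ring.
Qed.

Lemma cpow_0_exp (x : R) : cpow x 0 = 1.
Proof. unfold cpow. simpl. rewrite !Rmult_0_l, exp_0, cos_0, sin_0. unfold RtoC. f_equal; ring. Qed.

Lemma cpow_1_exp (x : R) : (0 < x)%R -> cpow x 1 = RtoC x.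
Proof.
  intros Hx. unfold cpow. simpl.
  rewrite Rmult_0_l, cos_0, sin_0, Rmult_1_l, exp_ln by auto. unfold RtoC. f_equal; ring.
Qed.

Lemma cpow_pow_base (x : R) (s : C) (k : nat) : (0 < x)%R -> cpow (x ^ k) s = cpow x s ^ k.
Proof.
  intros Hx. induction k as [|k IH]; simpl.
  - apply cpow_1_base.
  - rewrite cpow_mult_base, IH; auto. apply pow_lt; auto.
Qed.

Lemma Cmod_cpow (x : R) (s : C) : Cmod (cpow x s) = exp (Re s * ln x).
Proof.
  unfold cpow, Cmod; cbn [fst snd].
  set (r := exp (Re s * ln x)). set (t := (Im s * ln x)%R).
  replace ((r * cos t) ^ 2 + (r * sin t) ^ 2)%R with (r ^ 2 * (sin t ^ 2 + cos t ^ 2))%R by ring.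
  pose proof (sin2_cos2 t) as E. unfold Rsqr in E. simpl. rewrite !Rmult_1_r, E, Rmult_1_r.
  apply sqrt_square. left. apply exp_pos.
Qed.

(* Every power x^(m - k s) with natural m, k is the monomial x^m (x^-s)^k;
   all the Euler factors of the theorem are polynomials in x and x^-s. *)
Lemma cpow_affine (x : R) (m k : nat) (s e : C) : (0 < x)%R ->
  e = RtoC (INR m) - RtoC (INR k) * s -> cpow x e = RtoC x ^ m * cpow x (- s) ^ k.
Proof.
  intros Hx ->. revert m. induction k as [|k IHk]; intros m.
  - induction m as [|m IHm].
    + replace (RtoC (INR 0) - RtoC (INR 0) * s) with (RtoC 0) by (simpl; ring).
      simpl. rewrite cpow_0_exp. ring.
    + rewrite S_INR, RtoC_plus.
      replace (RtoC (INR m) + RtoC 1 - RtoC (INR 0) * s) with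
        (RtoC (INR m) - RtoC (INR 0) * s + 1) by ring.
      rewrite cpow_add, IHm, cpow_1_exp by auto. simpl. ring.
  - rewrite S_INR, RtoC_plus.
    replace (RtoC (INR m) - (RtoC (INR k) + RtoC 1) * s) with
      (RtoC (INR m) - RtoC (INR k) * s + - s) by ring.
    rewrite cpow_add, IHk. simpl. ring.
Qed.

Ltac cpow_monomial x m k s e :=
  rewrite (cpow_affine x m k s e) by
    (first [ lra | rewrite ?INR_IZR_INZ; simpl; ring ]).

Definition primeZ (p : nat) : Prop := prime (Z.of_nat p).

Lemma primeZ_ge2 (p : nat) : primeZ p -> (2 <= p)%nat.
Proof. intros H. apply prime_ge_2 in H. lia. Qed.

Lemma INR_prime_ge2 (p : nat) : primeZ p -> (2 <= INR p)%R.
Proof. intros Hp. apply (le_INR 2), primeZ_ge2, Hp. Qed.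

Lemma divide_Z (a b : nat) : Nat.divide a b <-> (Z.of_nat a | Z.of_nat b)%Z.
Proof.
  split.
  - intros [k Hk]. exists (Z.of_nat k). subst. apply Nat2Z.inj_mul.
  - intros [z Hz]. destruct (Nat.eq_dec a 0) as [Ha|Ha].
    + subst. rewrite Z.mul_0_r in Hz. exists 0%nat. lia.
    + assert (Hz0 : (0 <= z)%Z) by nia.
      exists (Z.to_nat z). apply Nat2Z.inj. rewrite Nat2Z.inj_mul, Z2Nat.id; auto.
Qed.

Lemma primeZ_mult (p a b : nat) :
  primeZ p -> Nat.divide p (a * b) -> Nat.divide p a \/ Nat.divide p b.
Proof.
  intros Hp H. apply divide_Z in H. rewrite Nat2Z.inj_mul in H.
  destruct (prime_mult _ Hp _ _ H); [left|right]; apply divide_Z; auto.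
Qed.

Lemma primeZ_divide_pow (p q k : nat) :
  primeZ p -> primeZ q -> Nat.divide p (q ^ k) -> p = q.
Proof.
  intros Hp Hq H. apply divide_Z in H. rewrite Nat2Z.inj_pow in H.
  apply Zpow_facts.prime_power_prime in H; auto; lia.
Qed.

Lemma prime_divisor_exists (n : nat) : (2 <= n)%nat -> exists p, primeZ p /\ Nat.divide p n.
Proof.
  induction n as [n IH] using lt_wf_ind. intros Hn.
  destruct (prime_dec (Z.of_nat n)) as [Hp|Hnp].
  - exists n. split; auto. apply Nat.divide_refl.
  - destruct (not_prime_divide (Z.of_nat n) ltac:(lia) Hnp) as [d [Hd1 Hd2]].
    destruct (IH (Z.to_nat d) ltac:(lia) ltac:(lia)) as [p [Hp Hpd]].
    exists p. split; auto. eapply Nat.divide_trans; [exact Hpd|].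
    apply divide_Z. rewrite Z2Nat.id by lia. exact Hd2.
Qed.

Lemma pow_decomp (q n : nat) : primeZ q -> (1 <= n)%nat ->
  exists v m, n = (q ^ v * m)%nat /\ ~ Nat.divide q m /\ (1 <= m)%nat.
Proof.
  intros Hq. pose proof (primeZ_ge2 _ Hq).
  induction n as [n IH] using lt_wf_ind. intros Hn.
  destruct (classic (Nat.divide q n)) as [[k Hk]|Hnd].
  - destruct (IH k ltac:(nia) ltac:(nia)) as [v [m [E [Hm1 Hm2]]]].
    exists (S v), m. split; auto. rewrite Hk, E. simpl. ring.
  - exists 0%nat, n. simpl. split; [lia|auto].
Qed.

Lemma pow_divide_iff (p m k j : nat) : primeZ p -> ~ Nat.divide p m ->
  Nat.divide (p ^ k) (p ^ j * m) <-> (k <= j)%nat.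
Proof.
  intros Hp Hm. pose proof (primeZ_ge2 p Hp). split.
  - intros [c Hc]. destruct (Nat.le_gt_cases k j) as [Hle|Hgt]; auto. exfalso.
    replace k with (j + S (k - j - 1))%nat in Hc by lia.
    rewrite Nat.pow_add_r in Hc.
    assert (Hc' : (p ^ j * m = p ^ j * (c * p ^ S (k - j - 1)))%nat) by (rewrite Hc; ring).
    apply Nat.mul_cancel_l in Hc'; [|apply Nat.pow_nonzero; lia].
    apply Hm. exists (c * p ^ (k - j - 1))%nat. rewrite Hc'. simpl. ring.
  - intros Hle. exists (p ^ (j - k) * m)%nat. replace j with (k + (j - k))%nat at 1 by lia.
    rewrite Nat.pow_add_r. ring.
Qed.

Lemma pow_decomp_unique (q k j m m' : nat) : primeZ q -> ~ Nat.divide q m -> ~ Nat.divide q m' ->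
  (q ^ k * m = q ^ j * m')%nat -> k = j /\ m = m'.
Proof.
  intros Hq H1 H2 E. pose proof (primeZ_ge2 _ Hq).
  assert (Hkj : k = j).
  { apply Nat.le_antisymm.
    - apply (pow_divide_iff q m' k j Hq H2). rewrite <- E. apply Nat.divide_factor_l.
    - apply (pow_divide_iff q m j k Hq H1). rewrite E. apply Nat.divide_factor_l. }
  subst j. split; auto. apply Nat.mul_cancel_l in E; auto. apply Nat.pow_nonzero. lia.
Qed.

Lemma divide_pow_coprime (q k b c : nat) : primeZ q -> ~ Nat.divide q b ->
  Nat.divide (q ^ k) c -> Nat.divide b c -> Nat.divide (q ^ k * b) c.
Proof.
  intros Hq Hb H1 [c' ->]. apply divide_Z in H1. rewrite Nat2Z.inj_mul, Nat2Z.inj_pow in H1.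
  assert (Hrel : rel_prime (Z.of_nat q ^ Z.of_nat k) (Z.of_nat b)).
  { apply rel_prime_sym, Zpow_facts.rel_prime_Zpower_r; [lia|]. apply rel_prime_sym.
    apply prime_rel_prime; auto. intros D. apply Hb, divide_Z, D. }
  rewrite Z.mul_comm in H1. apply Gauss in H1; [|exact Hrel].
  rewrite <- Nat2Z.inj_pow in H1. apply divide_Z in H1.
  apply Nat.mul_divide_mono_r, H1.
Qed.

Definition lsum (f : nat -> C) (l : list nat) : C := fold_right (fun n acc => f n + acc) 0 l.
Definition rsum (f : nat -> R) (l : list nat) : R := fold_right (fun n acc => f n + acc)%R 0%R l.

Lemma lsum_app (f : nat -> C) l1 l2 : lsum f (l1 ++ l2) = lsum f l1 + lsum f l2.
Proof. induction l1; simpl; [ring | rewrite IHl1; ring]. Qed.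
Lemma rsum_app (f : nat -> R) l1 l2 : rsum f (l1 ++ l2) = (rsum f l1 + rsum f l2)%R.
Proof. induction l1; simpl; [ring | rewrite IHl1; ring]. Qed.

Lemma lsum_perm (f : nat -> C) l l' : Permutation l l' -> lsum f l = lsum f l'.
Proof. induction 1; simpl; try congruence; ring. Qed.
Lemma rsum_perm (f : nat -> R) l l' : Permutation l l' -> rsum f l = rsum f l'.
Proof. induction 1; simpl; try congruence; ring. Qed.

Lemma lsum_filter (f : nat -> C) (P : nat -> bool) l :
  lsum f l = lsum f (filter P l) + lsum f (filter (fun x => negb (P x)) l).
Proof. induction l; simpl; [ring | destruct (P a); simpl; rewrite IHl; ring]. Qed.
Lemma rsum_filter (f : nat -> R) (P : nat -> bool) l :
  rsum f l = (rsum f (filter P l) + rsum f (filter (fun x => negb (P x)) l))%R.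
Proof. induction l; simpl; [ring | destruct (P a); simpl; rewrite IHl; ring]. Qed.

Lemma lsum_map (f : nat -> C) (h : nat -> nat) l : lsum f (map h l) = lsum (fun x => f (h x)) l.
Proof. induction l; simpl; auto. rewrite IHl; auto. Qed.
Lemma lsum_ext_in (f g : nat -> C) l : (forall x, In x l -> f x = g x) -> lsum f l = lsum g l.
Proof. induction l; simpl; intros H; auto. rewrite H, IHl; auto. Qed.

Lemma lsum_scal_r (c : C) (f : nat -> C) l : lsum (fun x => f x * c) l = lsum f l * c.
Proof. induction l; simpl; [ring | rewrite IHl; ring]. Qed.

Lemma Cmod_lsum (f : nat -> C) l : (Cmod (lsum f l) <= rsum (fun n => Cmod (f n)) l)%R.
Proof.
  induction l; simpl; [rewrite Cmod_0; lra|].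
  eapply Rle_trans; [apply Cmod_triangle | lra].
Qed.

Lemma rsum_nonneg (f : nat -> R) l : (forall n, 0 <= f n)%R -> (0 <= rsum f l)%R.
Proof. intros H; induction l; simpl; [lra | specialize (H a); lra]. Qed.

Lemma rsum_incl (f : nat -> R) l l' : (forall n, 0 <= f n)%R -> NoDup l -> NoDup l' ->
  incl l l' -> (rsum f l <= rsum f l')%R.
Proof.
  intros Hf Hl Hl' Hi. set (inl := fun x => if in_dec Nat.eq_dec x l then true else false).
  rewrite (rsum_filter f inl l').
  assert (HP : Permutation l (filter inl l')).
  { apply NoDup_Permutation; auto; [apply NoDup_filter; auto|].
    intros x. rewrite filter_In. unfold inl.
    split.
    - intros Hx. split; [auto | destruct in_dec; tauto].
    - intros [_ H]. destruct in_dec; [auto | discriminate]. }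
  rewrite <- (rsum_perm _ _ _ HP).
  pose proof (rsum_nonneg f (filter (fun x => negb (inl x)) l') Hf). lra.
Qed.

Lemma sum_n_lsum (g : nat -> C) N : sum_n g N = lsum g (seq 0 (S N)).
Proof.
  induction N.
  - rewrite sum_O. simpl. ring.
  - rewrite sum_Sn, IHN, (seq_S (S N) 0), lsum_app. simpl. change plus with Cplus. ring.
Qed.
Lemma sum_n_lsum_shift (g : nat -> C) N : sum_n (fun n => g (S n)) N = lsum g (seq 1 (S N)).
Proof. rewrite sum_n_lsum, <- seq_shift, lsum_map. reflexivity. Qed.
Lemma sum_n_rsum_shift (g : nat -> R) N : sum_n (fun n => g (S n)) N = rsum g (seq 1 (S N)).
Proof.
  induction N.
  - rewrite sum_O. simpl. ring.
  - rewrite sum_Sn, IHN, (seq_S (S N) 1), rsum_app. simpl. change plus with Rplus. ring.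
Qed.

Lemma lsum_map_prod (f : nat -> C) (h : nat * nat -> nat) l1 l2 :
  lsum f (map h (list_prod l1 l2)) = lsum (fun a => lsum (fun b => f (h (a, b))) l2) l1.
Proof.
  induction l1; simpl; auto. rewrite map_app, lsum_app, IHl1, map_map, lsum_map. reflexivity.
Qed.

Lemma NoDup_list_prod (l1 l2 : list nat) : NoDup l1 -> NoDup l2 -> NoDup (list_prod l1 l2).
Proof.
  induction 1 as [|a l1 Ha Hl1 IH]; intros H2; simpl; [constructor|].
  apply NoDup_app; auto.
  - apply FinFun.Injective_map_NoDup; auto. intros x y E. inversion E; auto.
  - intros [x y] Hin Hin'. apply in_map_iff in Hin. destruct Hin as [z [Ez _]].
    inversion Ez; subst. apply in_prod_iff in Hin'. tauto.
Qed.

Lemma in_le_list_max (x : nat) l : In x l -> (x <= list_max l)%nat.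
Proof.
  induction l; simpl; intros H; [contradiction|].
  destruct H as [<-|H]; [lia | specialize (IHl H); lia].
Qed.

Lemma prime_prod_0 (f : nat -> C) : prime_prod f 0 = 1.
Proof.
  unfold prime_prod. simpl. destruct (prime_dec 0) as [H|H]; [|reflexivity].
  pose proof (prime_ge_2 _ H). lia.
Qed.

Lemma prime_prod_S (f : nat -> C) N : prime_prod f (S N) =
  prime_prod f N * (if prime_dec (Z.of_nat (S N)) then f (S N) else 1).
Proof.
  unfold prime_prod. rewrite (seq_S (S N) 0), fold_right_app. simpl (0 + S N)%nat.
  set (step := fun p acc => if prime_dec (Z.of_nat p) then f p * acc else acc).
  assert (Hlin : forall a l, fold_right step a l = fold_right step 1 l * a).
  { intros a l. induction l; simpl; [ring|]. rewrite IHl. unfold step. destruct prime_dec; ring. }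
  rewrite Hlin. f_equal. simpl. unfold step. destruct prime_dec; ring.
Qed.

Lemma prime_prod_ext (f g : nat -> C) N :
  (forall p, primeZ p -> f p = g p) -> prime_prod f N = prime_prod g N.
Proof.
  intros H. induction N.
  - rewrite !prime_prod_0. auto.
  - rewrite !prime_prod_S, IHN. destruct prime_dec as [Hp|Hp]; auto. rewrite H; auto.
Qed.

Lemma prime_prod_mult (f g : nat -> C) N :
  prime_prod (fun p => f p * g p) N = prime_prod f N * prime_prod g N.
Proof.
  induction N.
  - rewrite !prime_prod_0. ring.
  - rewrite !prime_prod_S, IHN. destruct prime_dec; ring.
Qed.

Lemma prime_prod_inv (M L : nat -> C) (Z : C) : (forall p, primeZ p -> M p * L p = 1) ->
  Ccv (prime_prod L) Z -> Z <> 0 -> Ccv (prime_prod M) (/ Z).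
Proof.
  intros HML HL HZ.
  assert (E : forall N, prime_prod M N * prime_prod L N = 1).
  { intros N. rewrite <- prime_prod_mult, (prime_prod_ext _ (fun _ => 1)) by auto.
    induction N; [apply prime_prod_0|]. rewrite prime_prod_S, IHN. destruct prime_dec; ring. }
  apply (Ccv_ext _ (fun N => / prime_prod L N)); [|apply Ccv_inv; auto].
  intros N. specialize (E N).
  assert (HL0 : prime_prod L N <> 0).
  { intros H0. rewrite H0, Cmult_0_r in E. apply C1_nz. auto. }
  transitivity ((prime_prod M N * prime_prod L N) * / prime_prod L N); [field; auto|].
  rewrite E. ring.
Qed.

(** * The Euler product of an absolutely convergent multiplicative series *)

Definition smooth (N m : nat) : Prop := forall p, primeZ p -> Nat.divide p m -> (p <= N)%nat.

(* The N-smooth numbers whose prime exponents are at most K, listed as the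
   terms of the expansion of the finite product over p <= N of (1 + p + ... + p^K). *)
Fixpoint smooth_list (K N : nat) : list nat :=
  match N with
  | O => [1%nat]
  | S N' => if prime_dec (Z.of_nat (S N')) then
      map (fun km => (S N' ^ fst km * snd km)%nat) (list_prod (seq 0 (S K)) (smooth_list K N'))
    else smooth_list K N'
  end.

Lemma smooth_list_elem (K N m : nat) : In m (smooth_list K N) -> (1 <= m)%nat /\ smooth N m.
Proof.
  revert m. induction N; intros m Hm; cbn [smooth_list] in Hm.
  - destruct Hm as [<-|[]]. split; auto. intros p Hp Hd.
    apply Nat.divide_1_r in Hd. apply primeZ_ge2 in Hp. lia.
  - destruct prime_dec as [Hq|Hq].
    + apply in_map_iff in Hm. destruct Hm as [[k m0] [E Hin]]. simpl in E. subst m.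
      apply in_prod_iff in Hin. destruct Hin as [_ Hin]. destruct (IHN m0 Hin) as [H1 H2].
      split.
      * pose proof (Nat.pow_nonzero (S N) k ltac:(lia)). nia.
      * intros p Hp Hd. destruct (primeZ_mult _ _ _ Hp Hd) as [Hd'|Hd'].
        -- rewrite (primeZ_divide_pow p (S N) k Hp Hq Hd'). lia.
        -- specialize (H2 p Hp Hd'). lia.
    + destruct (IHN m Hm) as [H1 H2]. split; auto. intros p Hp Hd. specialize (H2 p Hp Hd). lia.
Qed.

Lemma smooth_list_NoDup (K N : nat) : NoDup (smooth_list K N).
Proof.
  induction N; cbn [smooth_list].
  - constructor; [intros [] | constructor].
  - destruct prime_dec as [Hq|Hq]; auto.
    apply NoDup_map_NoDup_ForallPairs; [|apply NoDup_list_prod; auto; apply seq_NoDup].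
    intros [k m] [j m'] H1 H2 E. simpl in E.
    apply in_prod_iff in H1, H2.
    destruct (smooth_list_elem K N m (proj2 H1)) as [_ Hs1].
    destruct (smooth_list_elem K N m' (proj2 H2)) as [_ Hs2].
    assert (Hn1 : ~ Nat.divide (S N) m) by (intros D; specialize (Hs1 _ Hq D); lia).
    assert (Hn2 : ~ Nat.divide (S N) m') by (intros D; specialize (Hs2 _ Hq D); lia).
    destruct (pow_decomp_unique (S N) k j m m' Hq Hn1 Hn2 E). subst; auto.
Qed.

(* Every N-smooth n <= K+1 occurs (its exponents are automatically <= K). *)
Lemma smooth_list_complete (K N n : nat) :
  (1 <= n)%nat -> (n <= S K)%nat -> smooth N n -> In n (smooth_list K N).
Proof.
  revert n. induction N; intros n H1 H2 Hs; cbn [smooth_list].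
  - destruct (Nat.eq_dec n 1) as [->|Hne]; [left; auto|].
    destruct (prime_divisor_exists n ltac:(lia)) as [p [Hp Hd]].
    specialize (Hs p Hp Hd). apply primeZ_ge2 in Hp. lia.
  - destruct prime_dec as [Hq|Hq].
    + destruct (pow_decomp (S N) n Hq H1) as [v [m [E [Hm1 Hm2]]]].
      apply in_map_iff. exists (v, m). split; [simpl; auto|].
      apply in_prod_iff. split.
      * apply in_seq. pose proof (Nat.pow_gt_lin_r (S N) v ltac:(apply primeZ_ge2 in Hq; lia)). nia.
      * pose proof (Nat.pow_nonzero (S N) v ltac:(lia)).
        apply IHN; [auto|nia|].
        intros p Hp Hd. assert (Hdn : Nat.divide p n) by (rewrite E; apply Nat.divide_mul_r; auto).
        specialize (Hs p Hp Hdn). destruct (Nat.eq_dec p (S N)) as [->|]; [contradiction|lia].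
    + apply IHN; auto. intros p Hp Hd. specialize (Hs p Hp Hd).
      destruct (Nat.eq_dec p (S N)) as [->|]; [contradiction|lia].
Qed.

Definition multiplicative (F : nat -> C) : Prop :=
  F 1%nat = 1 /\
  forall q k m, primeZ q -> ~ Nat.divide q m -> (1 <= m)%nat ->
    F (q ^ k * m)%nat = F (q ^ k)%nat * F m.

Lemma prime_prod_expand (F : nat -> C) (K N : nat) : multiplicative F ->
  prime_prod (fun p => sum_n (fun k => F (p ^ k)%nat) K) N = lsum F (smooth_list K N).
Proof.
  intros [HF1 Hmul]. induction N.
  - rewrite prime_prod_0. simpl. rewrite HF1. ring.
  - rewrite prime_prod_S, IHN. cbn [smooth_list]. destruct prime_dec as [Hq|Hq]; [|ring].
    rewrite lsum_map_prod.
    rewrite sum_n_lsum.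
    rewrite Cmult_comm, <- lsum_scal_r. apply lsum_ext_in. intros k _. simpl.
    rewrite Cmult_comm, <- lsum_scal_r. apply lsum_ext_in. intros m Hm.
    destruct (smooth_list_elem K N m Hm) as [Hm1 Hs]. rewrite Cmult_comm.
    symmetry. apply Hmul; auto. intros D. specialize (Hs _ Hq D). lia.
Qed.

Lemma is_series_R_eps (a : nat -> R) (l : R) : is_series a l ->
  forall eps, (0 < eps)%R -> exists N, forall n, (N <= n)%nat -> (Rabs (sum_n a n - l) < eps)%R.
Proof.
  intros H eps He. destruct (proj1 (filterlim_locally (sum_n a) l) H (mkposreal _ He)) as [N HN].
  exists N. intros n Hn. exact (HN n Hn).
Qed.

Section EulerProduct.

Variables (F : nat -> C) (g : R) (SF : C) (Lf : nat -> C).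
Hypothesis HF : multiplicative F.
Hypothesis Habs : is_series (fun n => Cmod (F (S n))) g.
Hypothesis Hsum : is_series (fun n => F (S n)) SF.
Hypothesis Hloc : forall p, primeZ p -> is_series (fun k => F (p ^ k)%nat) (Lf p).

Definition abs_partial (N : nat) : R := rsum (fun n => Cmod (F n)) (seq 1 N).

Lemma abs_partial_split (N m : nat) :
  (abs_partial N + rsum (fun n => Cmod (F n)) (seq (S N) m))%R = abs_partial (N + m).
Proof. unfold abs_partial. rewrite seq_app, rsum_app. reflexivity. Qed.

Lemma abs_partial_le (N : nat) : (abs_partial N <= g)%R.
Proof.
  destruct (Rle_lt_dec (abs_partial N) g) as [?|Hlt]; auto. exfalso.
  destruct (is_series_R_eps _ _ Habs (abs_partial N - g)%R ltac:(lra)) as [J HJ].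
  specialize (HJ (max J N) ltac:(lia)).
  rewrite (sum_n_rsum_shift (fun n => Cmod (F n))) in HJ.
  replace (S (max J N)) with (N + (S (max J N) - N))%nat in HJ by lia.
  fold (abs_partial (N + (S (max J N) - N))) in HJ. rewrite <- abs_partial_split in HJ.
  pose proof (rsum_nonneg (fun n => Cmod (F n)) (seq (S N) (S (max J N) - N))
    (fun n => Cmod_ge_0 _)).
  apply Rabs_def2 in HJ. lra.
Qed.

Lemma abs_tail_le (N m : nat) :
  (rsum (fun n => Cmod (F n)) (seq (S N) m) <= g - abs_partial N)%R.
Proof. pose proof (abs_partial_le (N + m)). rewrite <- abs_partial_split in H. lra. Qed.

Lemma partial_sum_approx (N : nat) :
  (Cmod (SF - lsum F (seq 1 N)) <= g - abs_partial N)%R.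
Proof.
  apply (Ccv_le (sum_n (fun n => F (S n)))); [apply Ccv_filterlim, Hsum|].
  exists N. intros j Hj. rewrite sum_n_lsum_shift.
  replace (S j) with (N + (S j - N))%nat by lia. rewrite seq_app, lsum_app.
  replace (lsum F (seq 1 N) + lsum F (seq (1 + N) (S j - N)) - lsum F (seq 1 N))
    with (lsum F (seq (1 + N) (S j - N))) by ring.
  eapply Rle_trans; [apply Cmod_lsum | apply abs_tail_le].
Qed.

(* For K >= N the smooth list contains 1..N, the rest lies beyond N. *)
Lemma smooth_sum_approx (N K : nat) : (N <= K)%nat ->
  (Cmod (lsum F (smooth_list K N) - lsum F (seq 1 N)) <= g - abs_partial N)%R.
Proof.
  intros HNK. set (A := smooth_list K N).
  rewrite (lsum_filter F (fun x => Nat.leb x N) A).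
  assert (HP : Permutation (filter (fun x => Nat.leb x N) A) (seq 1 N)).
  { apply NoDup_Permutation; [apply NoDup_filter, smooth_list_NoDup | apply seq_NoDup|].
    intros x. rewrite filter_In, in_seq, Nat.leb_le. split.
    - intros [Hx Hle]. destruct (smooth_list_elem K N x Hx). lia.
    - intros Hx. split; [|lia]. apply smooth_list_complete; try lia.
      intros p Hp Hd. apply Nat.divide_pos_le in Hd; lia. }
  rewrite (lsum_perm _ _ _ HP).
  replace (lsum F (seq 1 N) + lsum F (filter (fun x => negb (Nat.leb x N)) A) - lsum F (seq 1 N))
    with (lsum F (filter (fun x => negb (Nat.leb x N)) A)) by ring.
  eapply Rle_trans; [apply Cmod_lsum|].
  eapply Rle_trans; [|apply (abs_tail_le N (list_max A - N))].
  apply rsum_incl; [intros; apply Cmod_ge_0 | apply NoDup_filter, smooth_list_NoDup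
                   | apply seq_NoDup|].
  intros x Hx. apply filter_In in Hx. destruct Hx as [Hx Hle].
  apply Bool.negb_true_iff, Nat.leb_gt in Hle. apply in_seq.
  pose proof (in_le_list_max x A Hx). lia.
Qed.

Lemma truncated_prod_cv (N : nat) :
  Ccv (fun K => prime_prod (fun p => sum_n (fun k => F (p ^ k)%nat) K) N) (prime_prod Lf N).
Proof.
  induction N.
  - rewrite prime_prod_0. apply (Ccv_ext _ (fun _ => 1)); [|apply Ccv_const].
    intros K. apply prime_prod_0.
  - rewrite prime_prod_S.
    eapply Ccv_ext; [intros K; apply prime_prod_S|].
    apply Ccv_mult; auto. destruct prime_dec as [Hq|Hq]; [|apply Ccv_const].
    apply Ccv_filterlim, Hloc, Hq.
Qed.

Lemma prime_prod_approx (N : nat) : (Cmod (prime_prod Lf N - SF) <= 2 * (g - abs_partial N))%R.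
Proof.
  apply (Ccv_le _ _ _ _ (truncated_prod_cv N)). exists N. intros K HK.
  rewrite prime_prod_expand by exact HF.
  replace (lsum F (smooth_list K N) - SF) with
    ((lsum F (smooth_list K N) - lsum F (seq 1 N)) + - (SF - lsum F (seq 1 N))) by ring.
  eapply Rle_trans; [apply Cmod_triangle|]. rewrite Cmod_opp.
  pose proof (partial_sum_approx N). pose proof (smooth_sum_approx N K HK). lra.
Qed.

Theorem euler_product : filterlim (prime_prod Lf) eventually (locally SF).
Proof.
  apply Ccv_filterlim. intros eps He.
  destruct (is_series_R_eps _ _ Habs (eps / 3)%R ltac:(lra)) as [J HJ].
  exists (S J). intros N HN. specialize (HJ (N - 1)%nat ltac:(lia)).
  rewrite (sum_n_rsum_shift (fun n => Cmod (F n))) in HJ.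
  replace (S (N - 1)) with N in HJ by lia. fold (abs_partial N) in HJ.
  apply Rabs_def2 in HJ. pose proof (prime_prod_approx N). lra.
Qed.

End EulerProduct.

Lemma injection_bound (a b : nat) (f : nat -> nat) :
  (forall i, (i < a)%nat -> (f i < b)%nat) ->
  (forall i j, (i < a)%nat -> (j < a)%nat -> f i = f j -> i = j) -> (a <= b)%nat.
Proof.
  intros H1 H2.
  assert (Hnd : NoDup (map f (seq 0 a))).
  { apply NoDup_map_NoDup_ForallPairs; [|apply seq_NoDup].
    intros i j Hi Hj. apply in_seq in Hi, Hj. apply H2; lia. }
  assert (Hinc : incl (map f (seq 0 a)) (seq 0 b)).
  { intros y Hy. apply in_map_iff in Hy. destruct Hy as [i [<- Hi]]. apply in_seq in Hi.
    apply in_seq. specialize (H1 i ltac:(lia)). lia. }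
  pose proof (NoDup_incl_length Hnd Hinc). rewrite length_map, !length_seq in H. exact H.
Qed.

Lemma counts_le (P : (Rt3 -> Prop) -> Prop) (k k' : nat) :
  counts P k -> counts P k' -> (k <= k')%nat.
Proof.
  intros [L [HL [HP [Hd Hc]]]] [L' [HL' [HP' [Hd' Hc']]]].
  assert (Hex : forall i, exists j, (i < k)%nat -> (j < k')%nat /\
     set_equiv (nth i L (fun _ => False)) (nth j L' (fun _ => False))).
  { intros i. destruct (Nat.lt_ge_cases i k) as [Hi|Hi]; [|exists O; intros; lia].
    destruct (Hc' _ (HP _ (nth_In L (fun _ => False) (ltac:(lia) : (i < length L)%nat)))) as [T [HT HeT]].
    destruct (In_nth L' T (fun _ => False) HT) as [j [Hj Ej]].
    exists j. intros _. split; [lia|]. rewrite Ej. exact HeT. }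
  destruct (choice _ Hex) as [f Hf].
  apply (injection_bound k k' f); [intros i Hi; apply (Hf i Hi)|].
  intros i j Hi Hj E. apply Hd; auto.
  destruct (Hf i Hi) as [_ E1]. destruct (Hf j Hj) as [_ E2]. rewrite E in E1.
  intros x. rewrite (E1 x), (E2 x). tauto.
Qed.

Lemma a_cyclic_eq (n k : nat) : counts (cocyclic_subring_of_index n) k -> a_cyclic n = k.
Proof.
  intros H. unfold a_cyclic. destruct excluded_middle_informative as [H'|H'].
  - destruct (constructive_indefinite_description _ H') as [k' Hk']. simpl.
    apply Nat.le_antisymm; apply counts_le with (P := cocyclic_subring_of_index n); auto.
  - exfalso. apply H'. exists k. exact H.
Qed.

(** * The subrings S_x *)

Ltac rt3_ring := apply pair_equal_spec; split; [apply pair_equal_spec; split|]; ring.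

Lemma member_eq (S : Rt3 -> Prop) (x y : Rt3) : S x -> x = y -> S y.
Proof. intros H <-; auto. Qed.

Definition Sx (n : nat) (x : Z) : Rt3 -> Prop :=
  fun r => let '(a, b, c) := r in (Z.of_nat n | b + c * x)%Z.

Lemma Sx_subgroup (n : nat) (x : Z) : is_add_subgroup (Sx n x).
Proof.
  split; [|split].
  - simpl. exists 0%Z. ring.
  - intros [[a b] c] [[a' b'] c'] H1 H2. simpl in *.
    replace (b + b' + (c + c') * x)%Z with ((b + c * x) + (b' + c' * x))%Z by ring.
    apply Z.divide_add_r; auto.
  - intros [[a b] c] H1. simpl in *.
    replace (- b + - c * x)%Z with (- (b + c * x))%Z by ring. apply Z.divide_opp_r; auto.
Qed.

(* The classes of b t, 0 <= b < n, are the cosets of S_x. *)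
Lemma Sx_index (n : nat) (x : Z) : (0 < n)%nat -> has_index (Sx n x) n.
Proof.
  intros Hn. set (rep := fun j : nat => (0%Z, Z.of_nat j, 0%Z)).
  assert (Hrep : forall i, (i < n)%nat -> nth i (map rep (seq 0 n)) rzero = rep i).
  { intros i Hi. change rzero with (rep 0%nat). rewrite map_nth, seq_nth by auto. reflexivity. }
  exists (map rep (seq 0 n)). split; [|split].
  - rewrite length_map, length_seq. reflexivity.
  - intros i j Hi Hj H. rewrite !Hrep in H by auto. simpl in H.
    destruct H as [q Hq]. assert (q = 0%Z) by nia. subst. lia.
  - intros [[a b] c]. set (r := ((b + c * x) mod Z.of_nat n)%Z).
    assert (Hr : (0 <= r < Z.of_nat n)%Z) by (apply Z.mod_pos_bound; lia).
    exists (Z.to_nat r). split; [lia|]. rewrite Hrep by lia. unfold congr, rep; simpl.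
    rewrite Z2Nat.id by lia. unfold r. rewrite Z.mod_eq by lia.
    exists ((b + c * x) / Z.of_nat n)%Z. ring.
Qed.

Lemma Sx_cocyclic (n : nat) (x : Z) : cocyclic (Sx n x).
Proof.
  exists (0%Z, 1%Z, 0%Z). intros [[a b] c]. exists (b + c * x)%Z. unfold congr; simpl.
  exists 0%Z. ring.
Qed.

(* S_x is closed under multiplication exactly because n | x^3 (t^3 = 0 becomes x^3 = 0). *)
Lemma Sx_mul (n : nat) (x : Z) : (Z.of_nat n | x ^ 3)%Z ->
  forall r s, Sx n x r -> Sx n x s -> Sx n x (rmul r s).
Proof.
  intros [g Hg] [[a b] c] [[a' b'] c'] [al Hal] [be Hbe]. cbn [Sx rmul] in *.
  set (N := Z.of_nat n) in *.
  exists (a * be + a' * al + al * be * N * x - al * c' * x * x - be * c * x * x + c * c' * g)%Z.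
  assert (Hb : b = (al * N - c * x)%Z) by lia.
  assert (Hb' : b' = (be * N - c' * x)%Z) by lia.
  assert (Hx3 : (x * x * x = g * N)%Z) by (rewrite <- Hg; ring).
  rewrite Hb, Hb'.
  transitivity (a * be * N + a' * al * N + al * be * N * N * x - al * c' * x * x * N
                - be * c * x * x * N + c * c' * (x * x * x))%Z; [ring|].
  rewrite Hx3. ring.
Qed.

Lemma Sx_subring (n : nat) (x : Z) : (0 < n)%nat -> (Z.of_nat n | x ^ 3)%Z ->
  cocyclic_subring_of_index n (Sx n x).
Proof.
  intros Hn H3. split; [|split; [apply Sx_cocyclic | apply Sx_index; auto]].
  split; [apply Sx_subgroup|split; [|split]].
  - exists n. apply Sx_index; auto.
  - simpl. exists 0%Z. ring.
  - apply Sx_mul; auto.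
Qed.

(* Distinct residues give distinct subrings: t^2 - x t lies in S_x. *)
Lemma Sx_inj (n : nat) (x y : Z) : (0 <= x < Z.of_nat n)%Z -> (0 <= y < Z.of_nat n)%Z ->
  set_equiv (Sx n x) (Sx n y) -> x = y.
Proof.
  intros Hx Hy H. assert (Hm : Sx n x (0%Z, (- x)%Z, 1%Z)) by (unfold Sx; exists 0%Z; ring).
  apply H in Hm. unfold Sx in Hm. destruct Hm as [q Hq]. assert (q = 0%Z) by nia. subst. lia.
Qed.

(** * Every cocyclic subring of index n is some S_x *)

Section AdditiveSubgroup.

Variable S : Rt3 -> Prop.
Hypothesis HS : is_add_subgroup S.

Lemma subgroup_scale (y : Rt3) (k : Z) : S y -> S (rscale k y).
Proof.
  destruct HS as [H0 [Hadd Hopp]]. intros Hy.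
  assert (Hnat : forall m : nat, S (rscale (Z.of_nat m) y)).
  { destruct y as [[a b] c]. induction m.
    - eapply member_eq; [exact H0|]. unfold rzero, rscale. rt3_ring.
    - eapply member_eq; [exact (Hadd _ _ IHm Hy)|]. unfold radd, rscale.
      rewrite Nat2Z.inj_succ. rt3_ring. }
  destruct (Z.le_gt_cases 0 k) as [Hk|Hk].
  - rewrite <- (Z2Nat.id k Hk). apply Hnat.
  - eapply member_eq; [exact (Hopp _ (Hnat (Z.to_nat (- k))))|].
    destruct y as [[a b] c]. unfold ropp, rscale. rewrite Z2Nat.id by lia. rt3_ring.
Qed.

Lemma congr_trans (x y z : Rt3) : congr S x y -> congr S z y -> congr S x z.
Proof.
  destruct HS as [H0 [Hadd Hopp]]. unfold congr. intros H1 H2.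
  eapply member_eq; [exact (Hadd _ _ H1 (Hopp _ H2))|].
  destruct x as [[a b] c], y as [[a' b'] c'], z as [[a'' b''] c'']. unfold radd, ropp. rt3_ring.
Qed.

Lemma congr_mod (x g : Rt3) (k m : Z) : m <> 0%Z ->
  congr S x (rscale k g) -> S (rscale m g) -> congr S x (rscale (k mod m) g).
Proof.
  intros Hm H1 H2. pose proof (subgroup_scale _ (k / m) H2) as H3.
  destruct HS as [H0 [Hadd Hopp]]. unfold congr in *.
  eapply member_eq; [exact (Hadd _ _ H1 H3)|].
  rewrite (Z.div_mod k m Hm) at 1. set (q := (k / m)%Z). set (r := (k mod m)%Z).
  destruct x as [[a b] c], g as [[g0 g1] g2]. unfold radd, ropp, rscale. rt3_ring.
Qed.

End AdditiveSubgroup.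

Section CyclicQuotient.

Variables (S : Rt3 -> Prop) (g : Rt3) (n : nat) (reps : list Rt3) (kf : Rt3 -> Z).
Hypothesis HS : is_add_subgroup S.
Hypothesis Hn : (0 < n)%nat.
Hypothesis Hkf : forall x, congr S x (rscale (kf x) g).
Hypothesis Hdist : forall i j, (i < n)%nat -> (j < n)%nat ->
  congr S (nth i reps rzero) (nth j reps rzero) -> i = j.
Hypothesis Hcov : forall x, exists i, (i < n)%nat /\ congr S x (nth i reps rzero).

(* If m g lies in S, the n cosets are distinguished by coordinates mod m. *)
Lemma multiple_ge_index (m : nat) : (0 < m)%nat -> S (rscale (Z.of_nat m) g) -> (n <= m)%nat.
Proof.
  intros Hm Hsm. set (r := fun i => (kf (nth i reps rzero) mod Z.of_nat m)%Z).
  apply (injection_bound n m (fun i => Z.to_nat (r i))).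
  - intros i Hi. pose proof (Z.mod_pos_bound (kf (nth i reps rzero)) (Z.of_nat m) ltac:(lia)).
    unfold r. lia.
  - intros i j Hi Hj E.
    pose proof (Z.mod_pos_bound (kf (nth i reps rzero)) (Z.of_nat m) ltac:(lia)).
    pose proof (Z.mod_pos_bound (kf (nth j reps rzero)) (Z.of_nat m) ltac:(lia)).
    assert (E' : r i = r j) by (unfold r in *; lia).
    apply Hdist; auto.
    pose proof (congr_mod S HS _ _ _ (Z.of_nat m) ltac:(lia) (Hkf (nth i reps rzero)) Hsm) as A1.
    pose proof (congr_mod S HS _ _ _ (Z.of_nat m) ltac:(lia) (Hkf (nth j reps rzero)) Hsm) as A2.
    fold (r i) in A1. fold (r j) in A2. rewrite E' in A1. exact (congr_trans S HS _ _ _ A1 A2).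
Qed.

(* Among 0, g, ..., n g two are congruent (pigeonhole), so some multiple
   (j - i) g with 0 < j - i <= n lies in S; it must be n g. *)
Lemma index_multiple_in : S (rscale (Z.of_nat n) g).
Proof.
  destruct (choice (fun i j => (j < n)%nat /\ congr S (rscale (Z.of_nat i) g) (nth j reps rzero))
    (fun i => Hcov (rscale (Z.of_nat i) g))) as [jf Hjf].
  destruct (classic (exists i j, (i < j)%nat /\ (j <= n)%nat /\ jf i = jf j))
    as [[i [j [Hij [Hjn E]]]]|Hno].
  - destruct (Hjf i) as [_ Ci]. destruct (Hjf j) as [_ Cj]. rewrite E in Ci.
    pose proof (congr_trans S HS _ _ _ Cj Ci) as Cji. unfold congr in Cji.
    assert (Hs : S (rscale (Z.of_nat (j - i)) g)).
    { eapply member_eq; [exact Cji|]. rewrite Nat2Z.inj_sub by lia.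
      destruct g as [[g0 g1] g2]. unfold radd, ropp, rscale. rt3_ring. }
    pose proof (multiple_ge_index (j - i)%nat ltac:(lia) Hs).
    replace n with (j - i)%nat by lia. exact Hs.
  - exfalso. assert (HH : (n + 1 <= n)%nat); [|lia].
    apply (injection_bound (n + 1) n jf); [intros i _; apply (Hjf i)|].
    intros i j Hi Hj E. destruct (Nat.lt_total i j) as [Hlt|[Heq|Hgt]]; auto; exfalso;
      apply Hno; [exists i, j | exists j, i]; repeat split; auto; lia.
Qed.

Lemma generator_order (k : Z) : S (rscale k g) <-> (Z.of_nat n | k)%Z.
Proof.
  pose proof HS as [H0 [Hadd Hopp]]. split.
  - intros Hk. pose proof (subgroup_scale S HS _ (k / Z.of_nat n) index_multiple_in) as Hq.
    assert (Hr : S (rscale (k mod Z.of_nat n) g)).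
    { eapply member_eq; [exact (Hadd _ _ Hk (Hopp _ Hq))|].
      rewrite (Z.div_mod k (Z.of_nat n)) at 1 by lia.
      destruct g as [[g0 g1] g2]. unfold radd, ropp, rscale. rt3_ring. }
    pose proof (Z.mod_pos_bound k (Z.of_nat n) ltac:(lia)) as Hb.
    destruct (Z.eq_dec (k mod Z.of_nat n) 0) as [Hz|Hz]; [apply Z.mod_divide; lia|].
    exfalso. rewrite <- (Z2Nat.id (k mod Z.of_nat n)) in Hr by lia.
    pose proof (multiple_ge_index (Z.to_nat (k mod Z.of_nat n)) ltac:(lia) Hr). lia.
  - intros [q ->]. eapply member_eq; [exact (subgroup_scale S HS _ q index_multiple_in)|].
    destruct g as [[g0 g1] g2]. unfold rscale. rt3_ring.
Qed.

Lemma coordinate_linear (a b c : Z) :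
  congr S (a, b, c) (rscale (a * kf rone + b * kf (0, 1, 0) + c * kf (0, 0, 1))%Z g).
Proof.
  pose proof HS as [H0 [Hadd Hopp]]. unfold congr.
  pose proof (subgroup_scale S HS _ a (Hkf rone)) as A.
  pose proof (subgroup_scale S HS _ b (Hkf (0, 1, 0)%Z)) as B.
  pose proof (subgroup_scale S HS _ c (Hkf (0, 0, 1)%Z)) as Cc.
  eapply member_eq; [exact (Hadd _ _ A (Hadd _ _ B Cc))|].
  destruct g as [[g0 g1] g2]. unfold radd, ropp, rscale, rone. rt3_ring.
Qed.

Lemma member_iff_coordinate (a b c : Z) :
  S (a, b, c) <-> (Z.of_nat n | a * kf rone + b * kf (0, 1, 0) + c * kf (0, 0, 1))%Z.
Proof.
  pose proof HS as [H0 [Hadd Hopp]]. pose proof (coordinate_linear a b c) as K.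
  unfold congr in K. rewrite <- generator_order. split; intros Hs.
  - eapply member_eq; [exact (Hadd _ _ Hs (Hopp _ K))|].
    destruct g as [[g0 g1] g2]. unfold radd, ropp, rscale. rt3_ring.
  - eapply member_eq; [exact (Hadd _ _ K Hs)|].
    destruct g as [[g0 g1] g2]. unfold radd, ropp, rscale. rt3_ring.
Qed.

End CyclicQuotient.

(* If g1 u + g2 v = 1 and v^3 = 0 modulo N, then u is a unit modulo N and the
   condition "b u + c v = 0" is equivalent to "b + c x = 0" for x = v / u. *)
Lemma linear_condition_normalize (N u v g1 g2 : Z) : (0 < N)%Z ->
  (N | g1 * u + g2 * v - 1)%Z -> (N | v * v * v)%Z ->
  exists x, (0 <= x < N)%Z /\ (N | x ^ 3)%Z /\
    forall b c, (N | b * u + c * v)%Z <-> (N | b + c * x)%Z.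
Proof.
  intros HN HG HV3.
  (* an inverse of u modulo N *)
  set (u' := (3 * g1 - 3 * g1 * g1 * u + g1 * g1 * g1 * u * u)%Z).
  assert (HU : (N | 1 - u * u')%Z).
  { set (e := (g1 * u + g2 * v - 1)%Z) in *.
    replace (1 - u * u')%Z with
      (g2 * g2 * g2 * (v * v * v) - e * (3 * g2 * g2 * v * v - 3 * g2 * v * e + e * e))%Z
      by (unfold u', e; ring).
    apply Z.divide_sub_r; [apply Z.divide_mul_r; auto | apply Z.divide_mul_l; auto]. }
  set (x := ((v * u') mod N)%Z).
  assert (Hxb : (0 <= x < N)%Z) by (apply Z.mod_pos_bound; lia).
  assert (HX : (N | x - v * u')%Z).
  { exists (- ((v * u') / N))%Z. unfold x. rewrite Z.mod_eq by lia. ring. }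
  exists x. split; [auto|split].
  - set (d := (x - v * u')%Z) in *.
    replace (x ^ 3)%Z with
      (v * v * v * (u' * u' * u') + d * (3 * v * v * u' * u' + 3 * v * u' * d + d * d))%Z
      by (unfold d; ring).
    apply Z.divide_add_r; apply Z.divide_mul_l; auto.
  - intros b c. split; intros Hd.
    + replace (b + c * x)%Z with (u' * (b * u + c * v) + b * (1 - u * u') + c * (x - v * u'))%Z
        by ring.
      apply Z.divide_add_r; [apply Z.divide_add_r|]; apply Z.divide_mul_r; auto.
    + replace (b * u + c * v)%Z with
        (u * (b + c * x) - c * u * (x - v * u') + c * v * (1 - u * u'))%Z by ring.
      apply Z.divide_add_r; [apply Z.divide_sub_r|]; apply Z.divide_mul_r; auto.
Qed.

Lemma cocyclic_subring_is_Sx (n : nat) (S : Rt3 -> Prop) : cocyclic_subring_of_index n S ->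
  (0 < n)%nat /\ exists x, (0 <= x < Z.of_nat n)%Z /\ (Z.of_nat n | x ^ 3)%Z /\
                           set_equiv S (Sx n x).
Proof.
  intros [[HS [_ [H1 Hmul]]] [[g Hg] [reps [_ [Hdist Hcov]]]]].
  assert (Hn : (0 < n)%nat) by (destruct (Hcov rzero) as [i [Hi _]]; lia).
  split; auto.
  destruct (choice _ Hg) as [kf Hkf].
  pose proof (member_iff_coordinate S g n reps kf HS Hn Hkf Hdist Hcov) as Hmem.
  set (w := kf rone) in *. set (u := kf (0, 1, 0)%Z) in *. set (v := kf (0, 0, 1)%Z) in *.
  assert (Hw : (Z.of_nat n | w)%Z).
  { apply Hmem in H1. replace w with (1 * w + 0 * u + 0 * v)%Z by ring. exact H1. }
  assert (Hchar : forall a b c, S (a, b, c) <-> (Z.of_nat n | b * u + c * v)%Z).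
  { intros a b c. rewrite Hmem. split; intros Hd.
    - replace (b * u + c * v)%Z with (a * w + b * u + c * v - a * w)%Z by ring.
      apply Z.divide_sub_r; auto. apply Z.divide_mul_r; auto.
    - replace (a * w + b * u + c * v)%Z with (a * w + (b * u + c * v))%Z by ring.
      apply Z.divide_add_r; auto. apply Z.divide_mul_r; auto. }
  (* g generates, so its own coordinate is 1 modulo n *)
  destruct g as [[g0 g1] g2].
  assert (HG : (Z.of_nat n | g1 * u + g2 * v - 1)%Z).
  { pose proof (coordinate_linear S _ kf HS Hkf g0 g1 g2) as K.
    unfold congr in K. fold w u v in K.
    assert (HK : S (rscale (1 - (g0 * w + g1 * u + g2 * v)) (g0, g1, g2))).
    { eapply member_eq; [exact K|]. unfold radd, ropp, rscale. rt3_ring. }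
    apply (generator_order S _ n reps kf HS Hn Hkf Hdist Hcov) in HK.
    replace (g1 * u + g2 * v - 1)%Z with (- (1 - (g0 * w + g1 * u + g2 * v)) - g0 * w)%Z by ring.
    apply Z.divide_sub_r; [apply Z.divide_opp_r; auto | apply Z.divide_mul_r; auto]. }
  (* v t - u t^2 lies in S, hence so does its square v^2 t^2; so n | v^3 *)
  assert (HV3 : (Z.of_nat n | v * v * v)%Z).
  { assert (He : S (0, v, - u)%Z) by (apply Hchar; replace (v * u + - u * v)%Z with 0%Z by ring;
                                        apply Z.divide_0_r).
    assert (Hee : S (0, 0, v * v)%Z) by (eapply member_eq; [exact (Hmul _ _ He He)|];
                                           unfold rmul; rt3_ring).
    apply Hchar in Hee. replace (v * v * v)%Z with (0 * u + v * v * v)%Z by ring. exact Hee. }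
  destruct (linear_condition_normalize (Z.of_nat n) u v g1 g2 ltac:(lia) HG HV3)
    as [x [Hxb [Hx3 Hx]]].
  exists x. split; [auto | split; [auto|]].
  intros [[a b] c]. rewrite Hchar. apply Hx.
Qed.

Definition cube_roots_zero (n : nat) : list nat :=
  filter (fun x => Nat.eqb ((x * x * x) mod n) 0) (seq 0 n).

Lemma cube_roots_zero_spec (n x : nat) : (0 < n)%nat ->
  In x (cube_roots_zero n) <-> (x < n)%nat /\ (Z.of_nat n | Z.of_nat x ^ 3)%Z.
Proof.
  intros Hn. unfold cube_roots_zero.
  rewrite filter_In, in_seq, Nat.eqb_eq, Nat.Lcm0.mod_divide, divide_Z.
  replace (Z.of_nat x ^ 3)%Z with (Z.of_nat (x * x * x)) by (rewrite !Nat2Z.inj_mul; ring).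
  split; intros [H1 H2]; split; auto; lia.
Qed.

Theorem a_cyclic_cube_roots (n : nat) : (0 < n)%nat ->
  a_cyclic n = length (cube_roots_zero n).
Proof.
  intros Hn. apply a_cyclic_eq. set (X := cube_roots_zero n).
  exists (map (fun x => Sx n (Z.of_nat x)) X). split; [|split; [|split]].
  - rewrite length_map. reflexivity.
  - intros S HS. apply in_map_iff in HS. destruct HS as [x [<- Hx]].
    apply cube_roots_zero_spec in Hx; auto. apply Sx_subring; tauto.
  - intros i j Hi Hj E.
    rewrite !(nth_indep _ (fun _ => False) (Sx n (Z.of_nat 0))) in E by (rewrite length_map; auto).
    rewrite !(map_nth (fun x => Sx n (Z.of_nat x)) X 0%nat) in E.
    assert (Hxi : In (nth i X 0%nat) X) by (apply nth_In; auto).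
    assert (Hxj : In (nth j X 0%nat) X) by (apply nth_In; auto).
    apply cube_roots_zero_spec in Hxi, Hxj; auto.
    apply Sx_inj in E; try lia.
    apply (proj1 (NoDup_nth X 0%nat) (NoDup_filter _ (seq_NoDup _ _)) i j Hi Hj). lia.
  - intros S HS. destruct (cocyclic_subring_is_Sx n S HS) as [_ [x [Hxb [Hx3 He]]]].
    exists (Sx n x). split; auto. apply in_map_iff. exists (Z.to_nat x).
    rewrite Z2Nat.id by lia. split; [reflexivity|].
    apply cube_roots_zero_spec; auto. rewrite Z2Nat.id by lia. split; [lia|auto].
Qed.

(** * Multiplicativity of the count of cube roots of zero *)

Lemma filter_length_perm {A : Type} (f : A -> bool) (l l' : list A) : Permutation l l' ->
  length (filter f l) = length (filter f l').
Proof.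
  induction 1; simpl; auto; try congruence.
  - destruct (f x); simpl; auto.
  - destruct (f x), (f y); simpl; auto.
Qed.

Lemma filter_prod_length (P Q : nat -> bool) (la lb : list nat) :
  length (filter (fun yz => andb (P (fst yz)) (Q (snd yz))) (list_prod la lb)) =
  (length (filter P la) * length (filter Q lb))%nat.
Proof.
  induction la as [|y la IH]; simpl; auto.
  rewrite filter_app, length_app, IH, filter_map_swap, length_map. simpl.
  destruct (P y); simpl; [reflexivity | rewrite filter_false; reflexivity].
Qed.

Lemma cube_mod (a x : nat) : ((x * x * x) mod a = ((x mod a) * (x mod a) * (x mod a)) mod a)%nat.
Proof.
  rewrite Nat.Div0.mul_mod, (Nat.Div0.mul_mod x x). symmetry.
  rewrite Nat.Div0.mul_mod, (Nat.Div0.mul_mod (x mod a) (x mod a)), !Nat.Div0.mod_mod.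
  reflexivity.
Qed.

Section ChineseRemainder.

(* a and b are coprime, in the form needed: common multiples are multiples of a b. *)
Variables a b : nat.
Hypothesis Ha : (1 <= a)%nat.
Hypothesis Hb : (1 <= b)%nat.
Hypothesis Hab : forall c, Nat.divide a c -> Nat.divide b c -> Nat.divide (a * b) c.

Lemma crt_permutation :
  Permutation (map (fun x => (x mod a, x mod b)%nat) (seq 0 (a * b)))
              (list_prod (seq 0 a) (seq 0 b)).
Proof.
  set (h := fun x => (x mod a, x mod b)%nat).
  assert (Hdiv : forall x y, (y <= x)%nat -> (x mod a = y mod a)%nat -> (x mod b = y mod b)%nat ->
                 Nat.divide (a * b) (x - y)%nat).
  { intros x y Hle Ea Eb. apply Hab.
    - exists (x / a - y / a)%nat. rewrite Nat.mul_sub_distr_r.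
      pose proof (Nat.div_mod_eq x a). pose proof (Nat.div_mod_eq y a). lia.
    - exists (x / b - y / b)%nat. rewrite Nat.mul_sub_distr_r.
      pose proof (Nat.div_mod_eq x b). pose proof (Nat.div_mod_eq y b). lia. }
  assert (Hnd : NoDup (map h (seq 0 (a * b)))).
  { apply NoDup_map_NoDup_ForallPairs; [|apply seq_NoDup].
    intros x y Hx Hy E. apply in_seq in Hx, Hy. unfold h in E. inversion E as [[Ea Eb]].
    destruct (Nat.le_ge_cases y x) as [Hle|Hle].
    - destruct (Hdiv x y Hle Ea Eb) as [[|t] Ht]; simpl in Ht; lia.
    - destruct (Hdiv y x Hle (eq_sym Ea) (eq_sym Eb)) as [[|t] Ht]; simpl in Ht; lia. }
  assert (Hinc : incl (map h (seq 0 (a * b))) (list_prod (seq 0 a) (seq 0 b))).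
  { intros [y z] Hyz. apply in_map_iff in Hyz. destruct Hyz as [x [E _]]. unfold h in E.
    inversion E. apply in_prod_iff.
    split; apply in_seq; split; try lia; apply Nat.mod_upper_bound; lia. }
  apply NoDup_Permutation; auto; [apply NoDup_list_prod; apply seq_NoDup|].
  intros yz. split; [apply Hinc|]. apply NoDup_length_incl; auto.
  rewrite length_prod, length_map, !length_seq. lia.
Qed.

Lemma cube_roots_zero_mult :
  length (cube_roots_zero (a * b)) = (length (cube_roots_zero a) * length (cube_roots_zero b))%nat.
Proof.
  set (Pa := fun y => Nat.eqb ((y * y * y) mod a) 0).
  set (Pb := fun y => Nat.eqb ((y * y * y) mod b) 0).
  unfold cube_roots_zero. fold Pa Pb.
  rewrite <- filter_prod_length, <- (filter_length_perm _ _ _ crt_permutation),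
    filter_map_swap, length_map.
  f_equal. apply filter_ext. intros x. unfold Pa, Pb; simpl. rewrite <- !cube_mod.
  apply Bool.eq_iff_eq_true. rewrite Bool.andb_true_iff, !Nat.eqb_eq, !Nat.Lcm0.mod_divide.
  split.
  - intros D. split; eapply Nat.divide_trans; try exact D;
      [apply Nat.divide_factor_l | apply Nat.divide_factor_r].
  - intros [Da Db]. apply Hab; auto.
Qed.

End ChineseRemainder.

Lemma not_divide_cube (p m : nat) : primeZ p -> ~ Nat.divide p m -> ~ Nat.divide p (m * m * m).
Proof.
  intros Hp Hm D. destruct (primeZ_mult p (m * m) m Hp D) as [D'|D']; auto.
  destruct (primeZ_mult p m m Hp D'); auto.
Qed.

Lemma prime_pow_divide_cube (p k x : nat) : primeZ p ->
  Nat.divide (p ^ k) (x * x * x) <-> Nat.divide (p ^ ((k + 2) / 3)) x.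
Proof.
  intros Hp. destruct (Nat.eq_dec x 0) as [->|Hx]; [split; intros; apply Nat.divide_0_r|].
  destruct (pow_decomp p x Hp ltac:(lia)) as [v [m [-> [Hm Hm1]]]].
  replace (p ^ v * m * (p ^ v * m) * (p ^ v * m))%nat with (p ^ (v + v + v) * (m * m * m))%nat
    by (rewrite !Nat.pow_add_r; ring).
  rewrite (pow_divide_iff p (m * m * m) k (v + v + v) Hp (not_divide_cube p m Hp Hm)).
  rewrite (pow_divide_iff p m ((k + 2) / 3) v Hp Hm).
  pose proof (Nat.div_mod_eq (k + 2) 3). pose proof (Nat.mod_upper_bound (k + 2) 3 ltac:(lia)).
  lia.
Qed.

Lemma count_multiples (d q : nat) : (1 <= d)%nat ->
  length (filter (fun x => Nat.eqb (x mod d) 0) (seq 0 (d * q))) = q.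
Proof.
  intros Hd. induction q.
  - rewrite Nat.mul_0_r. reflexivity.
  - replace (d * S q)%nat with (d * q + S (d - 1))%nat by lia.
    rewrite seq_app, filter_app, length_app, IHq. simpl (0 + d * q)%nat. cbn [seq filter].
    rewrite (Nat.mul_comm d q), Nat.Div0.mod_mul. simpl.
    rewrite (filter_ext_in _ (fun _ => false)), filter_false; [simpl; lia|].
    intros x Hx. apply in_seq in Hx. apply Nat.eqb_neq.
    replace x with ((x - q * d) + q * d)%nat by lia.
    rewrite Nat.Div0.mod_add, Nat.mod_small by lia. lia.
Qed.

Lemma cube_roots_zero_prime_pow (p k : nat) : primeZ p ->
  length (cube_roots_zero (p ^ k)) = (p ^ (k - (k + 2) / 3))%nat.
Proof.
  intros Hp. pose proof (primeZ_ge2 p Hp). set (e := ((k + 2) / 3)%nat).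
  assert (He : (e <= k)%nat)
    by (unfold e; destruct k; [simpl; lia | apply Nat.Div0.div_le_upper_bound; lia]).
  unfold cube_roots_zero.
  rewrite (filter_ext_in _ (fun x => Nat.eqb (x mod p ^ e) 0)).
  - replace (p ^ k)%nat with (p ^ e * p ^ (k - e))%nat by (rewrite <- Nat.pow_add_r; f_equal; lia).
    apply count_multiples. pose proof (Nat.pow_nonzero p e). lia.
  - intros x _. apply Bool.eq_iff_eq_true. rewrite !Nat.eqb_eq, !Nat.Lcm0.mod_divide.
    apply prime_pow_divide_cube; auto.
Qed.

Lemma a_cyclic_prime_pow (p k : nat) : primeZ p -> a_cyclic (p ^ k) = (p ^ (k - (k + 2) / 3))%nat.
Proof.
  intros Hp. pose proof (primeZ_ge2 p Hp). rewrite a_cyclic_cube_roots.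
  - apply cube_roots_zero_prime_pow; auto.
  - pose proof (Nat.pow_nonzero p k). lia.
Qed.

Lemma a_cyclic_mult (q k m : nat) : primeZ q -> ~ Nat.divide q m -> (1 <= m)%nat ->
  a_cyclic (q ^ k * m) = (a_cyclic (q ^ k) * a_cyclic m)%nat.
Proof.
  intros Hq Hqm Hm. pose proof (primeZ_ge2 q Hq). pose proof (Nat.pow_nonzero q k ltac:(lia)).
  rewrite !a_cyclic_cube_roots by nia. apply cube_roots_zero_mult; [lia | lia|].
  intros c. apply divide_pow_coprime; auto.
Qed.

Lemma a_cyclic_le (n : nat) : (a_cyclic (S n) <= S n)%nat.
Proof.
  rewrite a_cyclic_cube_roots by lia. unfold cube_roots_zero.
  rewrite <- (length_seq (S n) 0) at 2. apply filter_length_le.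
Qed.

(** * Part (i): the local factors *)

Lemma is_series_period3 (T : nat -> C) (c SS : C) :
  is_series T SS -> (forall k, T (3 + k)%nat = c * T k) -> c <> 1 ->
  SS = (T 0%nat + T 1%nat + T 2%nat) / (1 - c).
Proof.
  intros HSS Hrec Hc.
  assert (Hshift : is_series (fun k => T (3 + k)%nat) (SS - sum_n T 2)).
  { apply is_series_incr_n; [lia|]. simpl Nat.pred.
    assert (H : is_series T ((SS - sum_n T 2) + sum_n T 2))
      by (replace (SS - sum_n T 2 + sum_n T 2) with SS by ring; exact HSS).
    exact H. }
  assert (Hscal : is_series (fun k => T (3 + k)%nat) (c * SS)).
  { apply (is_series_ext (fun k => scal c (T k))); [intros k; rewrite Hrec; reflexivity|].
    exact (is_series_scal (K:=C_AbsRing) (V:=C_NormedModule) c T SS HSS). }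
  assert (E : SS - sum_n T 2 = c * SS).
  { apply (Ccv_unique (sum_n (fun k => T (3 + k)%nat))); apply Ccv_filterlim; assumption. }
  rewrite !sum_Sn, sum_O in E. change plus with Cplus in E.
  assert (Hc' : 1 - c <> 0) by (intros H0; apply Hc; rewrite <- (Cplus_0_r c), <- H0; ring).
  field_simplify_eq; [|exact Hc']. replace (- SS * c) with (- (c * SS)) by ring.
  rewrite <- E. ring.
Qed.

Lemma prime_cpow_lt1 (p : nat) (s : C) : primeZ p -> (1 < Re s)%R ->
  (INR p * Cmod (cpow (INR p) (- s)) < 1)%R.
Proof.
  intros Hp Hs. pose proof (INR_prime_ge2 p Hp) as HP.
  assert (Hlp : (0 < ln (INR p))%R) by (rewrite <- ln_1; apply ln_increasing; lra).
  rewrite Cmod_cpow. rewrite <- (exp_ln (INR p)) at 1 by lra. rewrite <- exp_plus.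
  rewrite <- exp_0. apply exp_increasing. unfold Re in *. simpl. nra.
Qed.

Lemma Cmod_cpow_lt1 (p : nat) (w : C) : primeZ p -> (1 < Re w)%R -> (Cmod (cpow (INR p) (- w)) < 1)%R.
Proof.
  intros Hp Hw. pose proof (prime_cpow_lt1 p w Hp Hw). pose proof (INR_prime_ge2 p Hp).
  pose proof (Cmod_ge_0 (cpow (INR p) (- w))). nra.
Qed.

Lemma one_minus_neq0 (w : C) : (Cmod w < 1)%R -> 1 - w <> 0.
Proof.
  intros H E. assert (w = 1) by (replace w with (1 - (1 - w)) by ring; rewrite E; ring).
  subst. rewrite Cmod_1 in H. lra.
Qed.

(* exponent recursion behind a_{p^(k+3)} = p^2 a_{p^k} *)
Lemma exponent_shift3 (k : nat) : ((3 + k) - (3 + k + 2) / 3 = (k - (k + 2) / 3) + 2)%nat.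
Proof.
  replace (3 + k + 2)%nat with (k + 2 + 1 * 3)%nat by lia. rewrite Nat.div_add by lia.
  destruct k; [reflexivity|].
  assert ((S k + 2) / 3 <= S k)%nat by (apply Nat.Div0.div_le_upper_bound; lia). lia.
Qed.

Lemma local_series (p : nat) (s : C) : primeZ p -> (1 < Re s)%R ->
  is_series (fun k => RtoC (INR (a_cyclic (p ^ k))) * cpow (INR p) (- s) ^ k)
    ((1 + cpow (INR p) (- s) + RtoC (INR p) * cpow (INR p) (- s) ^ 2) /
     (1 - RtoC (INR p) ^ 2 * cpow (INR p) (- s) ^ 3)).
Proof.
  intros Hp Hs. pose proof (INR_prime_ge2 p Hp) as HP.
  set (z := cpow (INR p) (- s)). set (q := (INR p * Cmod z)%R).
  set (T := fun k => RtoC (INR (a_cyclic (p ^ k))) * z ^ k).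
  assert (Hq : (0 <= q < 1)%R).
  { split; [apply Rmult_le_pos; [lra | apply Cmod_ge_0] | apply prime_cpow_lt1; auto]. }
  assert (HT : forall k, T k = RtoC (INR p ^ (k - (k + 2) / 3)) * z ^ k).
  { intros k. unfold T. rewrite a_cyclic_prime_pow, pow_INR; auto. }
  assert (Hex : ex_series T).
  { apply (ex_series_le (K:=C_AbsRing) (V:=C_CompleteNormedModule) T (fun k => q ^ k)%R).
    - intros k. change (Cmod (T k) <= q ^ k)%R.
      rewrite HT, Cmod_mult, Cmod_pow, Cmod_R, Rabs_right by (apply Rle_ge, pow_le; lra).
      unfold q. rewrite Rpow_mult_distr. apply Rmult_le_compat_r; [apply pow_le, Cmod_ge_0|].
      apply Rle_pow; [lra|lia].
    - apply ex_series_geom. rewrite Rabs_right; lra. }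
  destruct Hex as [SS HSS].
  set (c := RtoC (INR p) ^ 2 * z ^ 3).
  assert (Hc : c <> 1).
  { intros Ec. assert (Hm : Cmod c = 1%R) by (rewrite Ec; apply Cmod_1).
    unfold c in Hm. rewrite Cmod_mult, !Cmod_pow, Cmod_R, Rabs_right in Hm by lra.
    assert (q ^ 2 * Cmod z = 1)%R by (rewrite <- Hm; unfold q; ring).
    pose proof (Cmod_ge_0 z). assert (Cmod z <= q)%R by (unfold q; nra). nra. }
  replace (1 + z + RtoC (INR p) * z ^ 2) with (T 0%nat + T 1%nat + T 2%nat)
    by (rewrite !HT; simpl; rewrite ?Rmult_1_r; ring).
  rewrite <- (is_series_period3 T c SS HSS); auto.
  intros k. rewrite !HT, exponent_shift3, pow_add, RtoC_mult, !RtoC_pow. unfold c.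
  rewrite Cpow_add_r. ring.
Qed.

Theorem local_factor (p : nat) : primeZ p ->
  exists sigma0 : R, forall s : C, (sigma0 < Re s)%R ->
    is_series (fun k => RtoC (INR (a_cyclic (p ^ k))) * cpow (INR p) (- (RtoC (INR k) * s)))
      ((1 + cpow (INR p) (- s) + cpow (INR p) (1 - 2 * s)) / (1 - cpow (INR p) (2 - 3 * s))).
Proof.
  intros Hp. exists 1%R. intros s Hs. pose proof (INR_prime_ge2 p Hp).
  cpow_monomial (INR p) 1%nat 2%nat s (1 - 2 * s).
  cpow_monomial (INR p) 2%nat 3%nat s (2 - 3 * s).
  replace (RtoC (INR p) ^ 1) with (RtoC (INR p)) by ring.
  eapply is_series_ext; [|apply (local_series p s Hp Hs)]. intros k. simpl.
  cpow_monomial (INR p) 0%nat k s (- (RtoC (INR k) * s)). ring.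
Qed.

(** * Dirichlet series: absolute convergence and the zeta function *)

Lemma Cmod_cpow_le (n k : nat) (w : C) : (1 <= INR n)%R -> (INR k <= Re w)%R ->
  (Cmod (cpow (INR n) (- w)) <= / INR n ^ k)%R.
Proof.
  intros Hn Hw. rewrite Cmod_cpow, <- Rpower_pow by lra. unfold Rpower.
  rewrite <- exp_Ropp.
  assert (Hl : (0 <= ln (INR n))%R) by (rewrite <- ln_1; apply ln_le; lra).
  destruct (Rle_lt_or_eq_dec _ _ (Rmult_le_compat_r _ _ _ Hl Hw)) as [H|H].
  - left. apply exp_increasing. unfold Re in *. simpl. lra.
  - right. f_equal. unfold Re in *. simpl. lra.
Qed.

Lemma is_series_telescope : is_series (fun n => / (INR (S n) * INR (S (S n))))%R 1%R.
Proof.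
  assert (Hs : forall n, sum_n (fun n => / (INR (S n) * INR (S (S n))))%R n = (1 - / INR (S (S n)))%R).
  { induction n.
    - rewrite sum_O. change (/ (INR 1 * INR 2) = 1 - / INR 2)%R. simpl. field.
    - rewrite sum_Sn, IHn. change plus with Rplus.
      change ((1 - / INR (S (S n))) + / (INR (S (S n)) * INR (S (S (S n))))
              = 1 - / INR (S (S (S n))))%R.
      rewrite !S_INR. pose proof (pos_INR n). field. lra. }
  assert (HL : is_lim_seq (sum_n (fun n => / (INR (S n) * INR (S (S n))))%R) 1%R).
  { apply (is_lim_seq_ext (fun n => 1 - / INR (S (S n)))%R); [intros; auto|].
    assert (H : is_lim_seq (fun n => 1 - / INR (S (S n)))%R (1 - 0)%R).
    { apply is_lim_seq_minus'; [apply is_lim_seq_const|].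
      apply (is_lim_seq_inv _ p_infty); [|discriminate].
      eapply is_lim_seq_ext; [|exact (proj1 (is_lim_seq_incr_n INR 2 p_infty) is_lim_seq_INR)].
      intros n. cbv beta. f_equal. lia. }
    rewrite Rminus_0_r in H. exact H. }
  exact HL.
Qed.

Lemma ex_series_inv_square (a : nat -> C) : (forall n, Cmod (a n) <= / (INR (S n) ^ 2))%R ->
  ex_series a /\ ex_series (fun n => Cmod (a n)).
Proof.
  intros H.
  set (b := fun n => (2 * / (INR (S n) * INR (S (S n))))%R).
  assert (Hb : ex_series b).
  { exists (2 * 1)%R.
    apply (is_series_scal (K:=R_AbsRing) (V:=R_NormedModule) 2%R _ _ is_series_telescope). }
  assert (Hab : forall n, (Cmod (a n) <= b n)%R).
  { intros n. eapply Rle_trans; [apply H|]. unfold b.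
    rewrite (S_INR (S n)). set (x := INR (S n)).
    assert (Hx : (1 <= x)%R) by (unfold x; rewrite S_INR; pose proof (pos_INR n); lra).
    replace (/ (x ^ 2))%R with ((/ x) * (/ x))%R by (field; lra).
    replace (2 * / (x * (x + 1)))%R with ((/ x) * (/ ((x + 1) / 2)))%R by (field; lra).
    apply Rmult_le_compat_l; [left; apply Rinv_0_lt_compat; lra|].
    apply Rinv_le_contravar; lra. }
  split.
  - apply (ex_series_le (K:=C_AbsRing) (V:=C_CompleteNormedModule) a b); auto.
  - apply (ex_series_le (K:=R_AbsRing) (V:=R_CompleteNormedModule) (fun n => Cmod (a n)) b); auto.
    intros n. change (Rabs (Cmod (a n)) <= b n)%R.
    rewrite Rabs_right by (apply Rle_ge, Cmod_ge_0). auto.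
Qed.

Lemma Cmod_series_le (a : nat -> C) (b : nat -> R) (l : C) (lb : R) :
  is_series a l -> is_series b lb -> (forall n, Cmod (a n) <= b n)%R -> (Cmod l <= lb)%R.
Proof.
  intros Ha Hb H.
  assert (Hpart : forall N, (Cmod (sum_n a N) <= sum_n b N)%R).
  { induction N; [rewrite !sum_O; auto|].
    rewrite !sum_Sn. change (Cmod (sum_n a N + a (S N)) <= sum_n b N + b (S N))%R.
    eapply Rle_trans; [apply Cmod_triangle|]. specialize (H (S N)). lra. }
  assert (Hsub0 : forall z : C, z - 0 = z) by (intros; ring).
  rewrite <- (Hsub0 l). apply (Ccv_le (sum_n a)); [apply Ccv_filterlim, Ha|].
  exists O. intros N _. rewrite Hsub0.
  eapply Rle_trans; [apply Hpart|].
  apply Rnot_lt_le. intros Hlt.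
  destruct (is_series_R_eps b lb Hb (sum_n b N - lb)%R ltac:(lra)) as [J HJ].
  specialize (HJ (N + J)%nat ltac:(lia)).
  assert (Hmono : forall k, (sum_n b N <= sum_n b (N + k))%R).
  { induction k; [rewrite Nat.add_0_r; lra|].
    rewrite Nat.add_succ_r, sum_Sn. change plus with Rplus.
    pose proof (Rle_trans _ _ _ (Cmod_ge_0 _) (H (S (N + k)))). lra. }
  pose proof (Hmono J). apply Rabs_def2 in HJ. lra.
Qed.

Lemma cpow_multiplicative (w : C) : multiplicative (fun n => cpow (INR n) (- w)).
Proof.
  split; [apply cpow_1_base|]. intros q k m Hq Hqm Hm.
  pose proof (primeZ_ge2 q Hq). rewrite mult_INR. apply cpow_mult_base.
  - apply lt_0_INR. pose proof (Nat.pow_nonzero q k ltac:(lia)). lia.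
  - apply lt_0_INR. lia.
Qed.

Lemma zeta_terms_bound (w : C) : (2 <= Re w)%R ->
  forall n, (Cmod (cpow (INR (S n)) (- w)) <= / (INR (S n) ^ 2))%R.
Proof.
  intros Hw n. apply Cmod_cpow_le; [rewrite S_INR; pose proof (pos_INR n); lra | simpl; lra].
Qed.

Lemma zeta_is_series (w : C) : (2 <= Re w)%R ->
  is_series (fun n => cpow (INR (S n)) (- w)) (zeta w).
Proof.
  intros Hw. destruct (ex_series_inv_square _ (zeta_terms_bound w Hw)) as [[SF HSF] _].
  change C in SF. unfold zeta. rewrite (CSeries_correct _ _ HSF). exact HSF.
Qed.

(* |zeta w - 1| <= sum_{n>=2} n^-3 <= 1/2 *)
Lemma zeta_neq0 (w : C) : (3 <= Re w)%R -> zeta w <> 0.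
Proof.
  intros Hw.
  assert (H1 : is_series (fun n => cpow (INR (S (S n))) (- w)) (zeta w - 1)).
  { apply (is_series_incr_1 (fun n => cpow (INR (S n)) (- w))).
    assert (HH : is_series (fun n => cpow (INR (S n)) (- w)) (zeta w - 1 + cpow (INR 1) (- w)))
      by (rewrite cpow_1_base; replace (zeta w - 1 + 1) with (zeta w) by ring;
          apply zeta_is_series; lra).
    exact HH. }
  assert (H2 : is_series (fun n => (/ 2 * / (INR (S n) * INR (S (S n))))%R) (/ 2 * 1)%R)
    by apply (is_series_scal (K:=R_AbsRing) (V:=R_NormedModule) (/ 2)%R _ _ is_series_telescope).
  assert (H3 : (Cmod (zeta w - 1) <= / 2 * 1)%R).
  { apply (Cmod_series_le _ _ _ _ H1 H2). intros n.
    pose proof (pos_INR n).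
    eapply Rle_trans; [apply (Cmod_cpow_le _ 3); [rewrite !S_INR; lra | simpl; lra]|].
    rewrite !S_INR.
    replace (/ 2 * / ((INR n + 1) * (INR n + 1 + 1)))%R
      with (/ (2 * (INR n + 1) * (INR n + 1 + 1)))%R by (field; lra).
    apply Rinv_le_contravar; [nra | simpl; nra]. }
  intros E. rewrite E in H3. replace (0 - 1) with (- (1)) in H3 by ring.
  rewrite Cmod_m1 in H3. lra.
Qed.

Lemma zeta_euler (w : C) : (2 <= Re w)%R ->
  filterlim (prime_prod (fun p => / (1 - cpow (INR p) (- w)))) eventually (locally (zeta w)).
Proof.
  intros Hw. destruct (ex_series_inv_square _ (zeta_terms_bound w Hw)) as [_ [g Hg]].
  apply (euler_product (fun n => cpow (INR n) (- w)) g); auto.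
  - apply cpow_multiplicative.
  - apply zeta_is_series; auto.
  - intros p Hp. eapply is_series_ext; [|apply is_series_Cgeom].
    + intros k. simpl. rewrite pow_INR, cpow_pow_base; auto.
      pose proof (INR_prime_ge2 p Hp); lra.
    + apply Cmod_cpow_lt1; auto. lra.
Qed.

Lemma inverse_zeta_product (w : C) : (3 <= Re w)%R ->
  Ccv (prime_prod (fun p => 1 - cpow (INR p) (- w))) (/ zeta w).
Proof.
  intros Hw. apply prime_prod_inv with (L := fun p => / (1 - cpow (INR p) (- w))).
  - intros p Hp. field. apply one_minus_neq0, Cmod_cpow_lt1; auto. lra.
  - apply Ccv_filterlim, zeta_euler. lra.
  - apply zeta_neq0, Hw.
Qed.

(** * Part (ii): the global Dirichlet series *)

Lemma a_cyclic_euler (s : C) : (3 < Re s)%R ->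
  exists D : C,
    is_series (fun n => RtoC (INR (a_cyclic (S n))) * cpow (INR (S n)) (- s)) D /\
    filterlim (prime_prod (fun p =>
      (1 + cpow (INR p) (- s) + RtoC (INR p) * cpow (INR p) (- s) ^ 2) /
      (1 - RtoC (INR p) ^ 2 * cpow (INR p) (- s) ^ 3))) eventually (locally D).
Proof.
  intros Hs. set (F := fun n => RtoC (INR (a_cyclic n)) * cpow (INR n) (- s)).
  assert (HF : multiplicative F).
  { split.
    - unfold F. rewrite cpow_1_base. pose proof (a_cyclic_prime_pow 2 0 prime_2) as H.
      simpl in H. rewrite H. simpl. ring.
    - intros q k m Hq Hqm Hm. unfold F. pose proof (primeZ_ge2 q Hq).
      rewrite a_cyclic_mult, mult_INR, RtoC_mult, (mult_INR (q ^ k)), cpow_mult_base by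
        (auto; apply lt_0_INR; try pose proof (Nat.pow_nonzero q k ltac:(lia)); lia).
      ring. }
  (* a_n n^-s is bounded by n * n^-3 *)
  assert (Hbd : forall n, (Cmod (F (S n)) <= / (INR (S n) ^ 2))%R).
  { intros n. assert (Hx : (1 <= INR (S n))%R) by (rewrite S_INR; pose proof (pos_INR n); lra).
    unfold F. rewrite Cmod_mult, Cmod_R, Rabs_right by (apply Rle_ge, pos_INR).
    assert (Ha : (INR (a_cyclic (S n)) <= INR (S n))%R) by (apply le_INR, a_cyclic_le).
    pose proof (Cmod_cpow_le (S n) 3 s Hx ltac:(simpl; lra)) as Hc.
    set (x := INR (S n)) in *. pose proof (Cmod_ge_0 (cpow x (- s))).
    eapply Rle_trans; [apply Rmult_le_compat; [apply pos_INR | auto | exact Ha | exact Hc]|].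
    replace (x * / x ^ 3)%R with (/ x ^ 2)%R by (field; lra). lra. }
  destruct (ex_series_inv_square (fun n => F (S n)) Hbd) as [[D HD] [g Hg]]. change C in D.
  exists D. split; [exact HD|].
  apply (euler_product F g D); auto.
  intros p Hp. eapply is_series_ext; [|apply (local_series p s Hp ltac:(lra))].
  intros k. unfold F. rewrite pow_INR, cpow_pow_base; auto. pose proof (INR_prime_ge2 p Hp); lra.
Qed.

Lemma euler_factor_split (x : R) (s : C) : (0 < x)%R ->
  1 - RtoC x ^ 2 * cpow x (- s) ^ 3 <> 0 ->
  1 - cpow x (- (2 * s)) - cpow x (1 - 3 * s) + cpow x (1 - 4 * s)
    - cpow x (2 - 4 * s) + cpow x (2 - 5 * s) =
  (1 + cpow x (- s) + RtoC x * cpow x (- s) ^ 2) / (1 - RtoC x ^ 2 * cpow x (- s) ^ 3)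
  * (1 - cpow x (- s)) * (1 - cpow x (- (2 * s - 1))) * (1 - cpow x (- (3 * s - 2))).
Proof.
  intros Hx Hden.
  cpow_monomial x 0%nat 2%nat s (- (2 * s)). cpow_monomial x 1%nat 3%nat s (1 - 3 * s).
  cpow_monomial x 1%nat 4%nat s (1 - 4 * s). cpow_monomial x 2%nat 4%nat s (2 - 4 * s).
  cpow_monomial x 2%nat 5%nat s (2 - 5 * s). cpow_monomial x 1%nat 2%nat s (- (2 * s - 1)).
  cpow_monomial x 2%nat 3%nat s (- (3 * s - 2)).
  field. exact Hden.
Qed.

Theorem global_dirichlet_series : exists sigma0 : R, forall s : C, (sigma0 < Re s)%R ->
  exists P : C,
    filterlim (prime_prod (fun p => 1 - cpow (INR p) (- (2 * s)) - cpow (INR p) (1 - 3 * s)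
                                      + cpow (INR p) (1 - 4 * s) - cpow (INR p) (2 - 4 * s)
                                      + cpow (INR p) (2 - 5 * s)))
      eventually (locally P) /\
    is_series (fun n => RtoC (INR (a_cyclic (S n))) * cpow (INR (S n)) (- s))
      (zeta s * zeta (2 * s - 1) * zeta (3 * s - 2) * P).
Proof.
  exists 3%R. intros s Hs.
  destruct (a_cyclic_euler s Hs) as [D [HD HDprod]].
  pose proof (zeta_neq0 s ltac:(lra)) as Hz1.
  pose proof (zeta_neq0 (2 * s - 1) ltac:(unfold Re in *; simpl; lra)) as Hz2.
  pose proof (zeta_neq0 (3 * s - 2) ltac:(unfold Re in *; simpl; lra)) as Hz3.
  exists (D * / zeta s * / zeta (2 * s - 1) * / zeta (3 * s - 2)). split.
  -
    set (L := fun p => (1 + cpow (INR p) (- s) + RtoC (INR p) * cpow (INR p) (- s) ^ 2) /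
                       (1 - RtoC (INR p) ^ 2 * cpow (INR p) (- s) ^ 3)).
    set (M := fun w p => 1 - cpow (INR p) (- w)).
    apply Ccv_filterlim, (Ccv_ext _ (fun N => prime_prod L N * prime_prod (M s) N *
                                     prime_prod (M (2 * s - 1)) N * prime_prod (M (3 * s - 2)) N)).
    + intros N. rewrite <- !prime_prod_mult. apply prime_prod_ext. intros p Hp.
      pose proof (INR_prime_ge2 p Hp). apply euler_factor_split; [lra|].
      replace (RtoC (INR p) ^ 2 * cpow (INR p) (- s) ^ 3) with (cpow (INR p) (- (3 * s - 2)))
        by (cpow_monomial (INR p) 2%nat 3%nat s (- (3 * s - 2)); reflexivity).
      apply one_minus_neq0, Cmod_cpow_lt1; auto. unfold Re in *. simpl. lra.
    + apply Ccv_mult; [apply Ccv_mult; [apply Ccv_mult|]|].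
      * apply Ccv_filterlim, HDprod.
      * apply inverse_zeta_product. lra.
      * apply inverse_zeta_product. unfold Re in *. simpl. lra.
      * apply inverse_zeta_product. unfold Re in *. simpl. lra.
  - replace (zeta s * zeta (2 * s - 1) * zeta (3 * s - 2) *
             (D * / zeta s * / zeta (2 * s - 1) * / zeta (3 * s - 2))) with D; [exact HD|].
    field. auto.
Qed.


Theorem corollary7 :
  (* (i) local factors *)
  (forall p : nat, prime (Z.of_nat p) ->
     exists sigma0 : R, forall s : C, (sigma0 < Re s)%R ->
       is_series
         (fun k : nat => Cmult (RtoC (INR (a_cyclic (p ^ k))))
                               (cpow (INR p) (- (RtoC (INR k) * s))))
         ((1 + cpow (INR p) (- s) + cpow (INR p) (1 - 2 * s))
          / (1 - cpow (INR p) (2 - 3 * s)))) /\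
  (* (ii) global Dirichlet series *)
  (exists sigma0 : R, forall s : C, (sigma0 < Re s)%R ->
     exists P : C,
       filterlim
         (prime_prod (fun p => 1 - cpow (INR p) (- (2 * s))
                                 - cpow (INR p) (1 - 3 * s)
                                 + cpow (INR p) (1 - 4 * s)
                                 - cpow (INR p) (2 - 4 * s)
                                 + cpow (INR p) (2 - 5 * s)))
         eventually (locally P) /\
       is_series
         (fun n : nat => Cmult (RtoC (INR (a_cyclic (S n))))
                               (cpow (INR (S n)) (- s)))
         (zeta s * zeta (2 * s - 1) * zeta (3 * s - 2) * P)).
Proof.
  split.
  - exact local_factor.
  - exact global_dirichlet_series.
Qed.
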